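(* Let $f\in\mathcal{C}(2\pi)$ with modulus of continuity $\omega_f$. Then for every integer $n\ge2$, $$E^\alpha_{nn}(f;[-\pi,\pi])\le\frac{1+|\alpha|_\infty(\|Id-L\|-1)}{1-|\alpha|_\infty}\,2\,\omega_f\Big(\frac{2\pi\sqrt3}{n+2}\Big)+\frac{|\alpha|_\infty}{1-|\alpha|_\infty}\|Id-L\|\,\|f\|_\infty.$$
   Context: Let $I=[x_0,x_N]=[-\pi,\pi]$, $N\ge2$, $\Delta=\{x_0<x_1<\dots<x_N\}$, $I_i=[x_{i-1},x_i]$, and $L_i(x)=a_ix+b_i$ the affine map of $I$ onto $I_i$ with $L_i(x_0)=x_{i-1}$, $L_i(x_N)=x_i$; $\alpha\in(-1,1)^N$, $|\alpha|_\infty=\max_i|\alpha_i|$. For $f,b$ continuous with $b(x_0)=f(x_0)$, $b(x_N)=f(x_N)$, $f^\alpha_{\Delta,b}$ is the unique continuous $g$ with $g(x)=f(x)+\alpha_i(g-b)(L_i^{-1}(x))$ for $x\in I_i$. $L:\mathcal{C}(2\pi)\to\mathcal{C}(2\pi)$ is bounded linear with $(Lf)(x_0)=f(x_0)$, $(Lf)(x_N)=f(x_N)$, and $\mathcal{F}^\alpha_{\Delta,L}(f)=f^\alpha_{\Delta,Lf}$. $\mathcal{C}(2\pi)=\{f\in\mathcal{C}([-\pi,\pi]):f(-\pi)=f(\pi)\}$ with sup norm; $\mathfrak{T}_m$ = real trigonometric polynomials of degree $\le m$; $\mathfrak{R}_{mn}(2\pi)=\{p/q:p\in\mathfrak{T}_m,q\in\mathfrak{T}_n,q>0\text{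 on }[-\pi,\pi]\}$; $\mathfrak{R}^\alpha_{mn}(2\pi)=\mathcal{F}^\alpha_{\Delta,L}(\mathfrak{R}_{mn}(2\pi))$; $E^\alpha_{mn}(f;[-\pi,\pi])=\inf\{\|f-r^\alpha\|_\infty:r^\alpha\in\mathfrak{R}^\alpha_{mn}(2\pi)\}$. The modulus of continuity is $\omega_f(\delta)=\sup\{|f(x)-f(y)|:x,y\in[-\pi,\pi],|x-y|\le\delta\}$. *)

From Stdlib Require Import Reals Lra Lia Classical ClassicalEpsilon.
Open Scope R_scope.

(** Supremum of a set of reals (0 if the set has no least upper bound). *)
Definition sup_R (E : R -> Prop) : R :=
  match excluded_middle_informative (exists l, is_lub E l) with
  | left H => proj1_sig (constructive_indefinite_description _ H)
  | right _ => 0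
  end.

Definition inf_R (E : R -> Prop) : R := - sup_R (fun y => E (- y)).

Definition Ipi (t : R) : Prop := - PI <= t <= PI.

Definition cont_on (a b : R) (g : R -> R) : Prop :=
  forall t, a <= t <= b -> forall eps, 0 < eps ->
    exists delta, 0 < delta /\
      forall s, a <= s <= b -> Rabs (s - t) < delta -> Rabs (g s - g t) < eps.

Definition C2pi (g : R -> R) : Prop := cont_on (- PI) PI g /\ g (- PI) = g PI.

Definition supnorm (g : R -> R) : R :=
  sup_R (fun y => exists t, Ipi t /\ y = Rabs (g t)).

Definition modcont (g : R -> R) (d : R) : R :=
  sup_R (fun y => exists s t, Ipi s /\ Ipi t /\ Rabs (s - t) <= d /\
                              y = Rabs (g s - g t)).

Definition trig_poly (m : nat) (p : R -> R) : Prop :=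
  exists a b : nat -> R, forall t,
    p t = sum_f_R0 (fun k => a k * cos (INR k * t) + b k * sin (INR k * t)) m.

Definition trig_rat (m n : nat) (r : R -> R) : Prop :=
  exists p q, trig_poly m p /\ trig_poly n q /\
    (forall t, Ipi t -> 0 < q t) /\ (forall t, r t = p t / q t).

Definition partition (N : nat) (x : nat -> R) : Prop :=
  (2 <= N)%nat /\ x 0%nat = - PI /\ x N = PI /\
  (forall i, (i < N)%nat -> x i < x (S i)).

(** Inverse of the affine map L_i of [x_0,x_N] onto [x_{i-1},x_i]
    with L_i(x_0)=x_{i-1}, L_i(x_N)=x_i. *)
Definition Linv (N : nat) (x : nat -> R) (i : nat) (y : R) : R :=
  x 0%nat + (x N - x 0%nat) * (y - x (i - 1)%nat) / (x i - x (i - 1)%nat).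

Fixpoint alpha_norm (alpha : nat -> R) (n : nat) : R :=
  match n with
  | O => 0
  | S k => Rmax (Rabs (alpha (S k))) (alpha_norm alpha k)
  end.

Definition is_FIF (N : nat) (x : nat -> R) (alpha : nat -> R)
  (f b g : R -> R) : Prop :=
  cont_on (- PI) PI g /\
  forall i, (1 <= i <= N)%nat -> forall t, x (i - 1)%nat <= t <= x i ->
    g t = f t + alpha i * (g (Linv N x i t) - b (Linv N x i t)).

(** Hypotheses on L : C(2pi) -> C(2pi) bounded linear, interpolating at the
    endpoints.  Functions are represented by R -> R, only values on [-pi,pi]
    matter. *)
Definition admissible_L (N : nat) (x : nat -> R) (L : (R -> R) -> (R -> R)) : Prop :=
  (forall g, C2pi g -> C2pi (L g)) /\
  (forall g h, C2pi g -> C2pi h -> (forall t, Ipi t -> g t = h t) ->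
     forall t, Ipi t -> L g t = L h t) /\
  (forall g h c d, C2pi g -> C2pi h ->
     forall t, Ipi t ->
       L (fun s => c * g s + d * h s) t = c * L g t + d * L h t) /\
  (exists M, forall g, C2pi g -> supnorm (L g) <= M * supnorm g) /\
  (forall g, C2pi g -> L g (x 0%nat) = g (x 0%nat) /\ L g (x N) = g (x N)).

Definition norm_IdmL (L : (R -> R) -> (R -> R)) : R :=
  sup_R (fun y => exists g, C2pi g /\ supnorm g <= 1 /\
                            y = supnorm (fun t => g t - L g t)).

Definition E_alpha (N : nat) (x : nat -> R) (alpha : nat -> R)
  (L : (R -> R) -> (R -> R)) (m n : nat) (f : R -> R) : R :=
  inf_R (fun y => exists r g, trig_rat m n r /\ is_FIF N x alpha r (L r) g /\
                              y = supnorm (fun t => f t - g t)).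

From Stdlib Require Import Reals Lra Lia ZArith ClassicalEpsilon.
Open Scope R_scope.

(* First approximate [f] by a trigonometric rational function.  With [M = n/2 + 1] equispaced
   nodes [t_j] and weights [W_j t = prod_(k <> j) sin^4 ((t - t_k) / 2)], trigonometric
   polynomials of degree [2 (M - 1) <= n], the function [r = sum_j f (t_j) W_j / sum_j W_j]
   lies in [R_nn], and [f t - r t] is a [W]-weighted average of the [f t - f (t_j)].  The
   nearest node contributes at most [w = omega_f delta], [delta = 2 PI sqrt 3 / (n + 2)]; a node
   at circular distance [d] contributes at most [(2 + d / delta) w], but its weight is smaller
   than that of the nearest node by the factor [(sin (e/2) / sin (d/2))^4].  Jordan's inequality
   and [sum 1/k^3 <= 29/24] bound the far contributions by [w] times the nearest weight, whence
   [||f - r|| <= 2 w].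

   The fractal perturbation [g] of [r] with base [L r] is the limit of the iterates of a
   contraction of ratio [|alpha|_oo], and [||g - r|| <= |alpha|_oo / (1 - |alpha|_oo) ||r - L r||
   <= |alpha|_oo / (1 - |alpha|_oo) ||Id - L|| (||f|| + 2 w)].  The bound follows from
   [||f - g|| <= ||f - r|| + ||g - r||]. *)

Lemma sup_R_is_lub E : (exists y, E y) -> (exists B, forall y, E y -> y <= B) ->
  is_lub E (sup_R E).
Proof.
  intros Hne [B HB].
  unfold sup_R. destruct (excluded_middle_informative _) as [H|H].
  - destruct (constructive_indefinite_description _ H) as [l Hl]; simpl; auto.
  - exfalso. apply H. destruct (completeness E) as [l Hl]; [exists B; exact HB|exact Hne|].
    exists l; exact Hl.
Qed.

Lemma le_sup_R E y : E y -> (exists B, forall y, E y -> y <= B) -> y <= sup_R E.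
Proof.
  intros Hy HB. apply (sup_R_is_lub E (ex_intro _ y Hy) HB). exact Hy.
Qed.

Lemma sup_R_le E B : (exists y, E y) -> (forall y, E y -> y <= B) -> sup_R E <= B.
Proof.
  intros Hne HB. apply (sup_R_is_lub E Hne (ex_intro _ B HB)). exact HB.
Qed.

Lemma sup_R_nonneg E y : E y -> 0 <= y -> 0 <= sup_R E.
Proof.
  intros Hy H0. unfold sup_R. destruct (excluded_middle_informative _) as [H|H]; [|lra].
  destruct (constructive_indefinite_description _ H) as [l Hl]; simpl.
  apply Rle_trans with y; [exact H0|apply Hl; exact Hy].
Qed.

Lemma Ipi_0 : Ipi 0.
Proof. unfold Ipi; pose proof PI_RGT_0; lra. Qed.

Definition bounded_Ipi (g : R -> R) : Prop :=
  exists B, forall t, Ipi t -> Rabs (g t) <= B.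

Lemma supnorm_nonneg g : 0 <= supnorm g.
Proof.
  apply sup_R_nonneg with (Rabs (g 0)); [|apply Rabs_pos].
  exists 0; split; auto; apply Ipi_0.
Qed.

Lemma Rabs_le_supnorm g t : bounded_Ipi g -> Ipi t -> Rabs (g t) <= supnorm g.
Proof.
  intros [B HB] Ht. apply le_sup_R; [exists t; auto|].
  exists B. intros y [s [Hs ->]]. auto.
Qed.

Lemma supnorm_le g B : (forall t, Ipi t -> Rabs (g t) <= B) -> supnorm g <= B.
Proof.
  intros HB. apply sup_R_le.
  - exists (Rabs (g 0)), 0; split; auto; apply Ipi_0.
  - intros y [s [Hs ->]]. auto.
Qed.

Lemma bounded_sub g h : bounded_Ipi g -> bounded_Ipi h -> bounded_Ipi (fun t => g t - h t).
Proof.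
  intros [B1 H1] [B2 H2]. exists (B1 + B2). intros t Ht.
  eapply Rle_trans; [apply Rabs_triang|]. rewrite Rabs_Ropp.
  specialize (H1 t Ht); specialize (H2 t Ht); lra.
Qed.

Lemma supnorm_sub_le g h : bounded_Ipi g -> bounded_Ipi h ->
  supnorm (fun t => g t - h t) <= supnorm g + supnorm h.
Proof.
  intros Hg Hh. apply supnorm_le. intros t Ht.
  eapply Rle_trans; [apply Rabs_triang|]. rewrite Rabs_Ropp.
  pose proof (Rabs_le_supnorm g t Hg Ht); pose proof (Rabs_le_supnorm h t Hh Ht); lra.
Qed.

Lemma cont_on_ext a b g h : (forall t, a <= t <= b -> g t = h t) ->
  cont_on a b g -> cont_on a b h.
Proof.
  intros E Hg t Ht eps He. destruct (Hg t Ht eps He) as [d [Hd H]].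
  exists d; split; auto. intros s Hs Hst. rewrite <- !E; auto.
Qed.

Lemma cont_on_const a b c : cont_on a b (fun _ => c).
Proof.
  intros t Ht eps He. exists 1; split; [lra|]. intros. rewrite Rminus_diag, Rabs_R0; auto.
Qed.

Lemma cont_on_plus a b g h :
  cont_on a b g -> cont_on a b h -> cont_on a b (fun t => g t + h t).
Proof.
  intros Hg Hh t Ht eps He.
  destruct (Hg t Ht (eps/2)) as [d1 [Hd1 H1]]; [lra|].
  destruct (Hh t Ht (eps/2)) as [d2 [Hd2 H2]]; [lra|].
  exists (Rmin d1 d2); split; [apply Rmin_pos; auto|]. intros s Hs Hst.
  replace (g s + h s - (g t + h t)) with ((g s - g t) + (h s - h t)) by ring.
  eapply Rle_lt_trans; [apply Rabs_triang|].
  specialize (H1 s Hs (Rlt_le_trans _ _ _ Hst (Rmin_l _ _))).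
  specialize (H2 s Hs (Rlt_le_trans _ _ _ Hst (Rmin_r _ _))). lra.
Qed.

Lemma cont_on_scal a b c g : cont_on a b g -> cont_on a b (fun t => c * g t).
Proof.
  intros Hg t Ht eps He. pose proof (Rabs_pos c) as Hc.
  destruct (Hg t Ht (eps / (Rabs c + 1))) as [d [Hd H]]; [apply Rdiv_lt_0_compat; lra|].
  exists d; split; auto. intros s Hs Hst. specialize (H s Hs Hst).
  replace (c * g s - c * g t) with (c * (g s - g t)) by ring. rewrite Rabs_mult.
  apply Rle_lt_trans with ((Rabs c + 1) * Rabs (g s - g t)).
  - pose proof (Rabs_pos (g s - g t)); nra.
  - apply Rmult_lt_compat_l with (r := Rabs c + 1) in H; [|lra].
    replace ((Rabs c + 1) * (eps / (Rabs c + 1))) with eps in H by (field; lra). exact H.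
Qed.

Lemma cont_on_minus a b g h :
  cont_on a b g -> cont_on a b h -> cont_on a b (fun t => g t - h t).
Proof.
  intros Hg Hh. apply cont_on_ext with (fun t => g t + (-1) * h t); [intros; ring|].
  apply cont_on_plus; [exact Hg|apply cont_on_scal; exact Hh].
Qed.

Lemma cont_on_comp_lipschitz a b c d h phi K : 0 < K -> cont_on a b h ->
  (forall t, c <= t <= d -> a <= phi t <= b) ->
  (forall s t, c <= s <= d -> c <= t <= d -> Rabs (phi s - phi t) <= K * Rabs (s - t)) ->
  cont_on c d (fun t => h (phi t)).
Proof.
  intros HK Hh Hmap Hlip t Ht eps He.
  destruct (Hh (phi t) (Hmap t Ht) eps He) as [e [He' H]].
  exists (e / K); split; [apply Rdiv_lt_0_compat; auto|].
  intros s Hs Hst. apply H; [auto|].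
  eapply Rle_lt_trans; [apply Hlip; auto|].
  apply Rmult_lt_compat_l with (r := K) in Hst; auto.
  replace (K * (e / K)) with e in Hst by (field; lra). exact Hst.
Qed.

Lemma cont_on_glue a b c g : a <= b -> b <= c ->
  cont_on a b g -> cont_on b c g -> cont_on a c g.
Proof.
  intros Hab Hbc H1 H2 t Ht eps He.
  destruct (Rlt_le_dec t b) as [Hlt|Hge]; [|destruct (Rle_lt_dec t b) as [Heq|Hgt]].
  - destruct (H1 t (conj (proj1 Ht) (Rlt_le _ _ Hlt)) eps He) as [d [Hd H]].
    exists (Rmin d (b - t)); split; [apply Rmin_pos; lra|].
    intros s Hs Hst. pose proof (Rmin_l d (b - t)). pose proof (Rmin_r d (b - t)).
    apply H; [|lra]. split; [lra|].
    unfold Rabs in Hst; destruct Rcase_abs in Hst; lra.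
  - assert (t = b) by lra. subst t.
    destruct (H1 b (conj Hab (Rle_refl _)) eps He) as [d1 [Hd1 Ha]].
    destruct (H2 b (conj (Rle_refl _) Hbc) eps He) as [d2 [Hd2 Hb]].
    exists (Rmin d1 d2); split; [apply Rmin_pos; auto|].
    intros s Hs Hst. pose proof (Rmin_l d1 d2). pose proof (Rmin_r d1 d2).
    destruct (Rle_dec s b); [apply Ha|apply Hb]; lra.
  - destruct (H2 t (conj (Rlt_le _ _ Hgt) (proj2 Ht)) eps He) as [d [Hd H]].
    exists (Rmin d (t - b)); split; [apply Rmin_pos; lra|].
    intros s Hs Hst. pose proof (Rmin_l d (t - b)). pose proof (Rmin_r d (t - b)).
    apply H; [|lra]. split; [|lra].
    unfold Rabs in Hst; destruct Rcase_abs in Hst; lra.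
Qed.

Lemma cont_on_of_continuity_pt a b g :
  (forall t, a <= t <= b -> continuity_pt g t) -> cont_on a b g.
Proof.
  intros H t Ht eps He. specialize (H t Ht).
  unfold continuity_pt, continue_in, limit1_in, limit_in in H. simpl in H.
  destruct (H eps He) as [d [Hd Hd']]. exists d; split; auto.
  intros s Hs Hst. destruct (Req_dec s t) as [->|Hne].
  - rewrite Rminus_diag, Rabs_R0; auto.
  - apply (Hd' s). split; [split; [exact I|auto]|auto].
Qed.

(* Continuous functions on [-PI, PI] are bounded: extend by the clamp to all of R
   and use the extreme value theorem [continuity_ab_maj]. *)
Definition clamp (t : R) : R := Rmax (- PI) (Rmin PI t).

Lemma clamp_in_Ipi t : Ipi (clamp t).
Proof.
  unfold clamp, Ipi, Rmax, Rmin. pose proof PI_RGT_0.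
  destruct (Rle_dec PI t); destruct (Rle_dec (-PI) _); lra.
Qed.

Lemma clamp_id t : Ipi t -> clamp t = t.
Proof.
  unfold clamp, Ipi, Rmax, Rmin; intros.
  destruct (Rle_dec PI t); destruct (Rle_dec (-PI) _); lra.
Qed.

Lemma clamp_lipschitz s t : Rabs (clamp s - clamp t) <= Rabs (s - t).
Proof.
  unfold clamp, Rmax, Rmin. pose proof PI_RGT_0.
  destruct (Rle_dec PI s); destruct (Rle_dec PI t);
  repeat match goal with |- context [Rle_dec ?a ?b] => destruct (Rle_dec a b) end;
  unfold Rabs; repeat destruct Rcase_abs; lra.
Qed.

Lemma cont_on_bounded g : cont_on (-PI) PI g -> bounded_Ipi g.
Proof.
  intros Hg. pose proof PI_RGT_0.
  assert (Hc : forall t, continuity_pt (fun s => Rabs (g (clamp s))) t).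
  { intros t eps Heps. simpl; unfold R_dist.
    destruct (Hg (clamp t) (clamp_in_Ipi t) eps Heps) as [d [Hd Hd']].
    exists d; split; auto. intros s [_ Hs].
    eapply Rle_lt_trans; [apply Rabs_triang_inv2|].
    apply Hd'; [apply clamp_in_Ipi|].
    eapply Rle_lt_trans; [apply clamp_lipschitz|exact Hs]. }
  destruct (continuity_ab_maj (fun s => Rabs (g (clamp s))) (-PI) PI) as [Mx [HM _]];
    [lra|intros c _; apply Hc|].
  exists (Rabs (g (clamp Mx))). intros t Ht.
  specialize (HM t Ht). simpl in HM. rewrite clamp_id in HM; auto.
Qed.

Lemma C2pi_bounded g : C2pi g -> bounded_Ipi g.
Proof. intros [H _]; apply cont_on_bounded; auto. Qed.
(** * The modulus of continuity *)

Lemma Rabs_sub_le_modcont f d s t : bounded_Ipi f -> Ipi s -> Ipi t -> Rabs (s - t) <= d ->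
  Rabs (f s - f t) <= modcont f d.
Proof.
  intros [B HB] Hs Ht Hd. apply le_sup_R; [exists s, t; auto|].
  exists (B + B). intros y [a [b [Ha [Hb [_ ->]]]]].
  eapply Rle_trans; [apply Rabs_triang|]. rewrite Rabs_Ropp.
  pose proof (HB a Ha); pose proof (HB b Hb); lra.
Qed.

Lemma modcont_nonneg f d : 0 <= d -> 0 <= modcont f d.
Proof.
  intros Hd. apply sup_R_nonneg with (Rabs (f 0 - f 0)); [|apply Rabs_pos].
  exists 0, 0. rewrite Rminus_diag, Rabs_R0. repeat split; auto; apply Ipi_0.
Qed.

Definition circ_dist (s t : R) : R := Rmin (Rabs (t - s)) (2 * PI - Rabs (t - s)).

Definition excess (dl d : R) : R := if Rlt_dec dl d then d / dl else 0.

Section ModulusOfContinuity.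
Variables (f : R -> R) (dl : R).
Hypothesis Hf : bounded_Ipi f.
Hypothesis Hdl : 0 < dl.
Let w := modcont f dl.

Lemma modcont_step s t : Ipi s -> Ipi t -> Rabs (s - t) <= dl -> Rabs (f s - f t) <= w.
Proof. intros; apply Rabs_sub_le_modcont; auto. Qed.

(* Cut [s, t] into steps of length [dl]; the intermediate points stay in [-PI, PI]. *)
Lemma modcont_chain k s t : Ipi s -> Ipi t -> Rabs (s - t) <= INR (S k) * dl ->
  Rabs (f s - f t) <= INR (S k) * w.
Proof.
  pose proof (modcont_nonneg f dl ltac:(lra)) as Hw. fold w in Hw.
  revert s t. induction k as [|k IH]; intros s t Hs Ht Hst.
  - simpl in *. rewrite Rmult_1_l in *. apply modcont_step; auto.
  - rewrite (S_INR (S k)) in Hst |- *. pose proof (pos_INR (S k)).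
    destruct (Rle_dec (Rabs (s - t)) dl) as [Hle|Hgt].
    { apply Rle_trans with w; [apply modcont_step; auto|nra]. }
    set (s' := if Rlt_dec s t then s + dl else s - dl).
    assert (Hs' : Ipi s' /\ Rabs (s - s') <= dl /\ Rabs (s' - t) <= INR (S k) * dl).
    { unfold s', Ipi in *. unfold Rabs in *.
      destruct (Rlt_dec s t); repeat destruct Rcase_abs; repeat split; lra. }
    destruct Hs' as [Hs'I [H1 H2]].
    replace (f s - f t) with ((f s - f s') + (f s' - f t)) by ring.
    eapply Rle_trans; [apply Rabs_triang|].
    pose proof (modcont_step s s' Hs Hs'I H1). pose proof (IH s' t Hs'I Ht H2). lra.
Qed.

Lemma modcont_linear s t : Ipi s -> Ipi t -> Rabs (f s - f t) <= (1 + Rabs (s - t) / dl) * w.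
Proof.
  intros Hs Ht. pose proof (modcont_nonneg f dl ltac:(lra)) as Hw. fold w in Hw.
  set (q := Rabs (s - t) / dl).
  assert (Hq : 0 <= q) by (apply Rmult_le_pos; [apply Rabs_pos|apply Rlt_le, Rinv_0_lt_compat; lra]).
  destruct (archimed q) as [H1 H2].
  assert (Hup : (0 < up q)%Z) by (apply lt_IZR; simpl; lra).
  destruct (Z.to_nat (up q)) as [|k] eqn:Ek; [lia|].
  assert (HI : INR (S k) = IZR (up q)).
  { rewrite <- Ek, INR_IZR_INZ, Z2Nat.id; [reflexivity|lia]. }
  apply Rle_trans with (INR (S k) * w).
  - apply modcont_chain; auto. rewrite HI.
    assert (Rabs (s - t) = q * dl) by (unfold q; field; lra). nra.
  - rewrite HI. nra.
Qed.

Hypothesis Hper : f (- PI) = f PI.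

Lemma modcont_wrap a b : Ipi a -> Ipi b -> a <= b ->
  Rabs (f b - f a) <= Rabs (f b - f PI) + Rabs (f (- PI) - f a).
Proof.
  intros. replace (f b - f a) with ((f b - f PI) + (f (-PI) - f a)) by (rewrite Hper; ring).
  apply Rabs_triang.
Qed.

Lemma modcont_periodic s t : Ipi s -> Ipi t ->
  Rabs (f t - f s) <= (2 + circ_dist s t / dl) * w.
Proof.
  intros Hs Ht. pose proof (modcont_nonneg f dl ltac:(lra)) as Hw. fold w in Hw.
  pose proof PI_RGT_0.
  assert (HpI : Ipi PI) by (unfold Ipi; lra).
  assert (HmI : Ipi (-PI)) by (unfold Ipi; lra).
  assert (Hgen : forall a b, Ipi a -> Ipi b -> a <= b ->
             Rabs (f b - f a) <= (2 + (2 * PI - (b - a)) / dl) * w).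
  { intros a b Ha Hb Hab. eapply Rle_trans; [apply modcont_wrap; auto|].
    pose proof (modcont_linear b PI Hb HpI) as E1. pose proof (modcont_linear (-PI) a HmI Ha) as E2.
    rewrite (Rabs_left1 (b - PI)) in E1 by (unfold Ipi in *; lra).
    rewrite (Rabs_left1 (-PI - a)) in E2 by (unfold Ipi in *; lra).
    replace ((2 + (2 * PI - (b - a)) / dl) * w) with
      ((1 + - (b - PI) / dl) * w + (1 + - (- PI - a) / dl) * w) by (field; lra).
    lra. }
  unfold circ_dist, Rmin. destruct (Rle_dec (Rabs (t - s)) (2 * PI - Rabs (t - s))) as [Hc|Hc].
  - eapply Rle_trans; [apply modcont_linear; auto|].
    apply Rmult_le_compat_r; auto. assert (0 <= Rabs (t - s) / dl) by
      (apply Rmult_le_pos; [apply Rabs_pos|apply Rlt_le, Rinv_0_lt_compat; lra]). lra.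
  - destruct (Rle_dec s t) as [Hst|Hst].
    + rewrite (Rabs_right (t - s)) by lra. apply Hgen; auto.
    + rewrite (Rabs_left (t - s)), <- Rabs_Ropp by lra.
      replace (- (t - s)) with (s - t) by ring. replace (- (f t - f s)) with (f s - f t) by ring.
      apply Hgen; auto; lra.
Qed.

Lemma modcont_periodic_close s t : Ipi s -> Ipi t -> circ_dist s t <= dl ->
  Rabs (f t - f s) <= 2 * w.
Proof.
  intros Hs Ht. pose proof (modcont_nonneg f dl ltac:(lra)) as Hw. fold w in Hw.
  pose proof PI_RGT_0.
  unfold circ_dist, Rmin. destruct (Rle_dec (Rabs (t - s)) (2 * PI - Rabs (t - s))) as [Hc|Hc]; intros Hd.
  - apply Rle_trans with w; [apply modcont_step; auto; rewrite Rabs_minus_sym; lra|lra].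
  - assert (Hgen : forall a b, Ipi a -> Ipi b -> a <= b -> 2 * PI - (b - a) <= dl ->
                   Rabs (f b - f a) <= 2 * w).
    { intros a b Ha Hb Hab Hba. eapply Rle_trans; [apply modcont_wrap; auto|].
      assert (Rabs (f b - f PI) <= w)
        by (apply modcont_step; auto; [unfold Ipi; lra|rewrite Rabs_left1; unfold Ipi in *; lra]).
      assert (Rabs (f (-PI) - f a) <= w)
        by (apply modcont_step; auto; [unfold Ipi; lra|rewrite Rabs_left1; unfold Ipi in *; lra]).
      lra. }
    destruct (Rle_dec s t) as [Hst|Hst].
    + rewrite (Rabs_right (t - s)) in Hd by lra. apply Hgen; auto.
    + rewrite (Rabs_left (t - s)) in Hd by lra. rewrite <- Rabs_Ropp.
      replace (- (f t - f s)) with (f s - f t) by ring. apply Hgen; auto; lra.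
Qed.

Lemma excess_nonneg d : 0 <= d -> 0 <= excess dl d.
Proof.
  intros. unfold excess. destruct Rlt_dec; [|lra].
  apply Rmult_le_pos; [lra|apply Rlt_le, Rinv_0_lt_compat; lra].
Qed.

Lemma modcont_periodic_excess s t : Ipi s -> Ipi t ->
  Rabs (f t - f s) <= (2 + excess dl (circ_dist s t)) * w.
Proof.
  intros Hs Ht. unfold excess. destruct (Rlt_dec dl (circ_dist s t)).
  - apply modcont_periodic; auto.
  - rewrite Rplus_0_r. apply modcont_periodic_close; auto; lra.
Qed.

End ModulusOfContinuity.

Lemma Rabs_le_alpha_norm alpha k i : (1 <= i <= k)%nat -> Rabs (alpha i) <= alpha_norm alpha k.
Proof.
  induction k as [|k IH]; intros Hi; [lia|simpl].
  destruct (Nat.eq_dec i (S k)) as [->|Hne]; [apply Rmax_l|].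
  eapply Rle_trans; [apply IH; lia|apply Rmax_r].
Qed.

Lemma alpha_norm_bounds alpha k : (forall i, (1 <= i <= k)%nat -> -1 < alpha i < 1) ->
  0 <= alpha_norm alpha k < 1.
Proof.
  induction k as [|k IH]; intros H; simpl; [lra|].
  destruct IH as [H0 H1]; [intros i Hi; apply H; lia|].
  assert (Rabs (alpha (S k)) < 1) by (destruct (H (S k)); [lia|apply Rabs_def1; lra]).
  split; [eapply Rle_trans; [apply H0|apply Rmax_r]|apply Rmax_lub_lt; auto].
Qed.

Section Partition.
Variables (N : nat) (x : nat -> R).
Hypothesis Hp : partition N x.

Lemma partition_le i j : (i <= j <= N)%nat -> x i <= x j.
Proof.
  destruct Hp as [_ [_ [_ Hinc]]]. intros [Hij HjN].
  induction Hij; [lra|]. apply Rle_trans with (x m); [apply IHHij; lia|]. apply Rlt_le, Hinc; lia.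
Qed.

Lemma partition_lt i j : (i < j <= N)%nat -> x i < x j.
Proof.
  destruct Hp as [_ [_ [_ Hinc]]]. intros [Hij HjN].
  apply Rlt_le_trans with (x (S i)); [apply Hinc; lia|]. apply partition_le; lia.
Qed.

Lemma partition_first : x 0%nat = - PI. Proof. apply Hp. Qed.
Lemma partition_last : x N = PI. Proof. apply Hp. Qed.
Lemma partition_N_ge2 : (2 <= N)%nat. Proof. apply Hp. Qed.

Lemma partition_Ipi i : (i <= N)%nat -> Ipi (x i).
Proof.
  intros. unfold Ipi. rewrite <- partition_first, <- partition_last.
  split; apply partition_le; lia.
Qed.

Lemma partition_cell_Ipi i t : (1 <= i <= N)%nat -> x (i - 1)%nat <= t <= x i -> Ipi t.
Proof.
  intros Hi Ht. pose proof (partition_Ipi (i-1) ltac:(lia)). pose proof (partition_Ipi i ltac:(lia)).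
  unfold Ipi in *; lra.
Qed.

Lemma partition_cell_exists t : Ipi t -> exists i, (1 <= i <= N)%nat /\ x (i - 1)%nat <= t <= x i.
Proof.
  intros Ht. pose proof partition_N_ge2 as HN.
  assert (H : forall k, (1 <= k <= N)%nat -> x 0%nat <= t <= x k ->
            exists i, (1 <= i <= N)%nat /\ x (i - 1)%nat <= t <= x i).
  { induction k as [|k IH]; intros Hk Htk; [lia|].
    destruct (Nat.eq_dec k 0) as [->|Hk0]; [exists 1%nat; split; [lia|exact Htk]|].
    destruct (Rle_dec t (x k)); [apply IH; [lia|lra]|].
    exists (S k); split; [lia|]. replace (S k - 1)%nat with k by lia. lra. }
  apply (H N); [lia|]. rewrite partition_first, partition_last; auto.
Qed.

Definition Linv_slope i := (x N - x 0%nat) / (x i - x (i - 1)%nat).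

Lemma Linv_slope_pos i : (1 <= i <= N)%nat -> 0 < Linv_slope i.
Proof.
  intros Hi. unfold Linv_slope. apply Rdiv_lt_0_compat.
  - rewrite partition_first, partition_last; pose proof PI_RGT_0; lra.
  - pose proof (partition_lt (i-1) i ltac:(lia)); lra.
Qed.

Lemma Linv_affine i y : (1 <= i <= N)%nat ->
  Linv N x i y = x 0%nat + Linv_slope i * (y - x (i - 1)%nat).
Proof.
  intros Hi. unfold Linv, Linv_slope. pose proof (partition_lt (i-1) i ltac:(lia)). field. lra.
Qed.

Lemma Linv_lipschitz i s t : (1 <= i <= N)%nat ->
  Rabs (Linv N x i s - Linv N x i t) <= Linv_slope i * Rabs (s - t).
Proof.
  intros Hi. rewrite !Linv_affine by auto.
  replace (x 0%nat + Linv_slope i * (s - x (i - 1)%nat) - (x 0%nat + Linv_slope i * (t - x (i - 1)%nat)))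
    with (Linv_slope i * (s - t)) by ring.
  rewrite Rabs_mult, Rabs_right; [lra|]. apply Rle_ge, Rlt_le, Linv_slope_pos; auto.
Qed.

Lemma Linv_left i : (1 <= i <= N)%nat -> Linv N x i (x (i - 1)%nat) = - PI.
Proof. intros. rewrite Linv_affine, partition_first by auto. ring. Qed.

Lemma Linv_right i : (1 <= i <= N)%nat -> Linv N x i (x i) = PI.
Proof.
  intros. unfold Linv. rewrite partition_first, partition_last.
  pose proof (partition_lt (i-1) i ltac:(lia)). field. lra.
Qed.

Lemma Linv_Ipi i t : (1 <= i <= N)%nat -> x (i - 1)%nat <= t <= x i -> Ipi (Linv N x i t).
Proof.
  intros Hi Ht. unfold Linv. rewrite partition_first, partition_last.
  pose proof (partition_lt (i-1) i ltac:(lia)). pose proof PI_RGT_0.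
  set (c := x (i - 1)%nat) in *. set (d := x i) in *.
  assert (Hr : 0 <= (t - c) / (d - c) <= 1).
  { split; [apply Rmult_le_pos; [lra|apply Rlt_le, Rinv_0_lt_compat; lra]|].
    apply (Rmult_le_reg_r (d - c)); [lra|]. field_simplify; lra. }
  replace (- PI + (PI - - PI) * (t - c) / (d - c)) with (- PI + 2 * PI * ((t - c) / (d - c)))
    by (field; lra).
  unfold Ipi. nra.
Qed.

Lemma cont_on_piecewise g :
  (forall i, (1 <= i <= N)%nat -> cont_on (x (i - 1)%nat) (x i) g) -> cont_on (- PI) PI g.
Proof.
  intros H. rewrite <- partition_first, <- partition_last. pose proof partition_N_ge2 as HN.
  assert (Hk : forall k, (1 <= k <= N)%nat -> cont_on (x 0%nat) (x k) g).
  { induction k as [|k IH]; intros Hk; [lia|].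
    destruct (Nat.eq_dec k 0) as [->|Hk0]; [apply (H 1%nat); lia|].
    apply cont_on_glue with (x k); [apply partition_le; lia|apply partition_le; lia|apply IH; lia|].
    replace k with (S k - 1)%nat at 1 by lia. apply H; lia. }
  apply Hk; lia.
Qed.

End Partition.

(** * Existence of the fractal function *)

(* Writing [g = r + u] with [v = r - b], the functional equation becomes the fixed-point
   equation [u = alpha_i (u + v) o L_i^-1] on [I_i].  Since [v] vanishes at [+-PI], the
   right-hand side is well defined at the nodes and the operator maps continuous
   functions vanishing at [+-PI] to such functions; it contracts by [|alpha|_oo]. *)
Section FractalFixedPoint.
Variables (N : nat) (x : nat -> R) (alpha : nat -> R) (v : R -> R).
Hypothesis Hp : partition N x.
Hypothesis Halpha : forall i, (1 <= i <= N)%nat -> -1 < alpha i < 1.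
Hypothesis Hv : cont_on (- PI) PI v.
Hypothesis Hv0 : v (- PI) = 0.
Hypothesis Hv1 : v PI = 0.

Let a := alpha_norm alpha N.

Let a_bounds : 0 <= a < 1.
Proof. apply alpha_norm_bounds; exact Halpha. Qed.

Definition in_cell (t : R) (i : nat) : Prop := (1 <= i <= N)%nat /\ x (i - 1)%nat <= t <= x i.

Definition cell_index (t : R) : nat := epsilon (inhabits 0%nat) (in_cell t).

Lemma cell_index_spec t : Ipi t -> in_cell t (cell_index t).
Proof.
  intros Ht. unfold cell_index. apply epsilon_spec. exact (partition_cell_exists N x Hp t Ht).
Qed.

Definition fif_op (w : R -> R) (t : R) : R :=
  if excluded_middle_informative (Ipi t) then
    alpha (cell_index t) * (w (Linv N x (cell_index t) t) + v (Linv N x (cell_index t) t))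
  else 0.

Definition vanishing_cont (w : R -> R) : Prop :=
  cont_on (- PI) PI w /\ w (- PI) = 0 /\ w PI = 0.

(* At a node shared by two cells both formulas give [0]. *)
Lemma fif_op_on_cell w i t : vanishing_cont w -> (1 <= i <= N)%nat -> x (i - 1)%nat <= t <= x i ->
  fif_op w t = alpha i * (w (Linv N x i t) + v (Linv N x i t)).
Proof.
  intros [_ [Hw0 Hw1]] Hi Ht. unfold fif_op.
  destruct (excluded_middle_informative (Ipi t)) as [HI|C];
    [|exfalso; exact (C (partition_cell_Ipi N x Hp i t Hi Ht))].
  destruct (cell_index_spec t HI) as [Hj Htj]. set (j := cell_index t) in *.
  assert (Hnode : forall k l, (1 <= k <= N)%nat -> (1 <= l <= N)%nat -> (k < l)%nat ->
            x (k - 1)%nat <= t <= x k -> x (l - 1)%nat <= t <= x l ->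
            Linv N x k t = PI /\ Linv N x l t = - PI).
  { intros k l Hk Hl Hkl Htk Htl.
    assert (x k <= x (l - 1)%nat) by (apply (partition_le N x Hp); lia).
    replace t with (x k) at 1 by lra. replace t with (x (l - 1)%nat) by lra.
    split; [apply (Linv_right N x Hp)|apply (Linv_left N x Hp)]; auto. }
  destruct (Nat.lt_total i j) as [Hlt|[->|Hgt]]; [| reflexivity |].
  - destruct (Hnode i j Hi Hj Hlt Ht Htj) as [-> ->]. rewrite Hw0, Hv0, Hw1, Hv1. ring.
  - destruct (Hnode j i Hj Hi Hgt Htj Ht) as [-> ->]. rewrite Hw0, Hv0, Hw1, Hv1. ring.
Qed.

Lemma fif_op_vanishing_cont w : vanishing_cont w -> vanishing_cont (fif_op w).
Proof.
  intros HP. pose proof (partition_N_ge2 N x Hp) as HN.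
  split; [|split].
  - apply (cont_on_piecewise N x Hp). intros i Hi.
    apply cont_on_ext with (fun t => alpha i * (w (Linv N x i t) + v (Linv N x i t)));
      [intros t Ht; symmetry; apply fif_op_on_cell; auto|].
    apply cont_on_scal.
    apply cont_on_comp_lipschitz with (a := - PI) (b := PI) (K := Linv_slope N x i)
      (h := fun s => w s + v s).
    + apply Linv_slope_pos; auto.
    + apply cont_on_plus; [apply HP|exact Hv].
    + intros t Ht. apply (Linv_Ipi N x Hp i t Hi Ht).
    + intros s t _ _. apply Linv_lipschitz; auto.
  - rewrite <- (partition_first N x Hp).
    rewrite (fif_op_on_cell w 1%nat) by (auto; try lia; split; apply (partition_le N x Hp); lia).
    rewrite (Linv_left N x Hp 1%nat ltac:(lia) : Linv N x 1 (x 0%nat) = - PI). destruct HP as [_ [-> _]]. rewrite Hv0. ring.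
  - rewrite <- (partition_last N x Hp).
    rewrite (fif_op_on_cell w N) by (auto; try lia; split; apply (partition_le N x Hp); lia).
    rewrite (Linv_right N x Hp N) by lia. destruct HP as [_ [_ ->]]. rewrite Hv1. ring.
Qed.

Lemma fif_op_contraction w1 w2 B : (forall s, Ipi s -> Rabs (w1 s - w2 s) <= B) ->
  forall t, Rabs (fif_op w1 t - fif_op w2 t) <= a * B.
Proof.
  intros HB t. pose proof a_bounds.
  assert (HB0 : 0 <= B) by (eapply Rle_trans; [apply Rabs_pos|apply (HB 0 Ipi_0)]).
  unfold fif_op. destruct (excluded_middle_informative (Ipi t)) as [HI|HI].
  - destruct (cell_index_spec t HI) as [Hj Htj]. set (j := cell_index t) in *.
    replace (alpha j * (w1 (Linv N x j t) + v (Linv N x j t)) -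
             alpha j * (w2 (Linv N x j t) + v (Linv N x j t)))
      with (alpha j * (w1 (Linv N x j t) - w2 (Linv N x j t))) by ring.
    rewrite Rabs_mult. apply Rmult_le_compat; try apply Rabs_pos.
    + apply Rabs_le_alpha_norm; auto.
    + apply HB. apply (Linv_Ipi N x Hp); auto.
  - rewrite Rminus_diag, Rabs_R0. nra.
Qed.

Definition fif_iter (k : nat) : R -> R := Nat.iter k fif_op (fun _ => 0).

Lemma fif_iter_vanishing_cont k : vanishing_cont (fif_iter k).
Proof.
  induction k as [|k IH]; simpl; [split; [apply cont_on_const|auto]|].
  apply fif_op_vanishing_cont, IH.
Qed.

Definition v_bound : R :=
  proj1_sig (constructive_indefinite_description _ (cont_on_bounded v Hv)).

Lemma v_bound_spec t : Ipi t -> Rabs (v t) <= v_bound.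
Proof.
  unfold v_bound. destruct (constructive_indefinite_description _ _) as [B HB]; simpl; auto.
Qed.

(* A priori bound for [|u_k - u_(k+p)|] and [|u_k - u|]. *)
Let tail (k : nat) : R := a * v_bound * a ^ k / (1 - a).

Let tail_nonneg k : 0 <= tail k.
Proof.
  pose proof a_bounds. assert (0 <= v_bound) by (eapply Rle_trans; [apply Rabs_pos|apply (v_bound_spec 0 Ipi_0)]).
  assert (0 <= a ^ k) by (apply pow_le; lra).
  unfold tail. apply Rmult_le_pos; [|apply Rlt_le, Rinv_0_lt_compat; lra].
  apply Rmult_le_pos; [nra|auto].
Qed.

Let tail_S k : tail (S k) = a * tail k.
Proof. unfold tail. simpl. field. pose proof a_bounds. lra. Qed.

Let tail_small eps : 0 < eps -> exists k, tail k < eps.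
Proof.
  intros He. pose proof a_bounds. pose proof (tail_nonneg 0).
  set (C := a * v_bound / (1 - a)).
  assert (HC : 0 <= C) by (unfold tail in *; unfold C; simpl in *; lra).
  destruct (pow_lt_1_zero a ltac:(rewrite Rabs_right; lra) (eps / (C + 1))) as [k Hk];
    [apply Rdiv_lt_0_compat; lra|].
  exists k. specialize (Hk k (le_n _)). rewrite Rabs_right in Hk by (apply Rle_ge, pow_le; lra).
  replace (tail k) with (C * a ^ k) by (unfold tail, C; field; lra).
  apply Rle_lt_trans with ((C + 1) * a ^ k); [pose proof (pow_le a k ltac:(lra)); nra|].
  apply Rmult_lt_compat_l with (r := C + 1) in Hk; [|lra].
  replace ((C + 1) * (eps / (C + 1))) with eps in Hk by (field; lra). exact Hk.
Qed.

Let tail_antitone k p : (k <= p)%nat -> tail p <= tail k.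
Proof.
  intros Hkp. induction Hkp as [|p Hkp IH]; [lra|].
  rewrite tail_S. pose proof a_bounds. pose proof (tail_nonneg p). nra.
Qed.

Lemma fif_iter_step k t : Rabs (fif_iter (S k) t - fif_iter k t) <= (1 - a) * tail k.
Proof.
  pose proof a_bounds.
  replace ((1 - a) * tail k) with (a * v_bound * a ^ k) by (unfold tail; field; lra).
  revert t. induction k as [|k IH]; intros t.
  - simpl. rewrite Rmult_1_r, Rminus_0_r. unfold fif_op.
    destruct (excluded_middle_informative (Ipi t)) as [HI|HI].
    + destruct (cell_index_spec t HI) as [Hj Htj]. rewrite Rplus_0_l, Rabs_mult.
      apply Rmult_le_compat; try apply Rabs_pos; [apply Rabs_le_alpha_norm; auto|].
      apply v_bound_spec, (Linv_Ipi N x Hp); auto.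
    + rewrite Rabs_R0. pose proof (tail_nonneg 0). unfold tail in H0. simpl in H0.
      apply Rmult_le_reg_r with (/ (1 - a)); [apply Rinv_0_lt_compat; lra|]. lra.
  - eapply Rle_trans; [apply fif_op_contraction; intros s _; apply IH|]. simpl. lra.
Qed.

Lemma fif_iter_dist k p t : Rabs (fif_iter (k + p) t - fif_iter k t) <= tail k.
Proof.
  pose proof a_bounds. pose proof (tail_nonneg k).
  assert (G : Rabs (fif_iter (k + p) t - fif_iter k t) <= (1 - a ^ p) * tail k).
  { induction p as [|p IH].
    - rewrite Nat.add_0_r, Rminus_diag, Rabs_R0. simpl. lra.
    - replace (fif_iter (k + S p) t - fif_iter k t) with
        ((fif_iter (S (k + p)) t - fif_iter (k + p) t) + (fif_iter (k + p) t - fif_iter k t))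
        by (rewrite Nat.add_succ_r; ring).
      eapply Rle_trans; [apply Rabs_triang|].
      pose proof (fif_iter_step (k + p) t) as Hs.
      replace (tail (k + p)) with (a ^ p * tail k) in Hs
        by (unfold tail; rewrite pow_add; field; lra).
      replace ((1 - a ^ S p) * tail k) with ((1 - a) * (a ^ p * tail k) + (1 - a ^ p) * tail k)
        by (simpl; ring).
      lra. }
  eapply Rle_trans; [exact G|]. pose proof (pow_le a p ltac:(lra)). nra.
Qed.

Lemma fif_iter_cauchy t : Cauchy_crit (fun k => fif_iter k t).
Proof.
  intros eps He. destruct (tail_small eps He) as [k Hk].
  assert (Gen : forall p q, (p >= k)%nat -> (q >= p)%nat -> Rabs (fif_iter q t - fif_iter p t) < eps).
  { intros p q Hpk Hq. replace q with (p + (q - p))%nat by lia.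
    eapply Rle_lt_trans; [apply fif_iter_dist|].
    eapply Rle_lt_trans; [|exact Hk]. apply tail_antitone; lia. }
  exists k. intros n m Hn Hm. unfold R_dist.
  destruct (Nat.le_ge_cases n m).
  - rewrite Rabs_minus_sym. apply Gen; lia.
  - apply Gen; lia.
Qed.

Definition fif_fix (t : R) : R := proj1_sig (R_complete _ (fif_iter_cauchy t)).

Lemma fif_fix_dist k t : Rabs (fif_fix t - fif_iter k t) <= tail k.
Proof.
  assert (Hcv : Un_cv (fun k => fif_iter k t) (fif_fix t))
    by (unfold fif_fix; destruct (R_complete _ _) as [l Hl]; simpl; auto).
  destruct (Rle_lt_dec (Rabs (fif_fix t - fif_iter k t)) (tail k)) as [|Hlt]; [assumption|].
  exfalso. set (eps := Rabs (fif_fix t - fif_iter k t) - tail k).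
  destruct (Hcv eps ltac:(unfold eps; lra)) as [K HK].
  specialize (HK (max K k) ltac:(lia)). unfold R_dist in HK.
  pose proof (fif_iter_dist k (max K k - k) t) as Hd.
  replace (k + (max K k - k))%nat with (max K k) in Hd by lia.
  assert (Rabs (fif_fix t - fif_iter k t) <=
          Rabs (fif_iter (max K k) t - fif_fix t) + Rabs (fif_iter (max K k) t - fif_iter k t)).
  { rewrite <- (Rabs_Ropp (fif_iter (max K k) t - fif_fix t)).
    replace (fif_fix t - fif_iter k t) with
      (- (fif_iter (max K k) t - fif_fix t) + (fif_iter (max K k) t - fif_iter k t)) by ring.
    apply Rabs_triang. }
  unfold eps in HK. lra.
Qed.

Let eq0_of_tail_bound z : (forall k, Rabs z <= 2 * tail k) -> z = 0.
Proof.
  intros H. destruct (Req_dec z 0) as [|Hz]; auto. exfalso.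
  pose proof (Rabs_pos_lt _ Hz).
  destruct (tail_small (Rabs z / 2)) as [k Hk]; [lra|]. specialize (H k). lra.
Qed.

Lemma fif_fix_vanishing_cont : vanishing_cont fif_fix.
Proof.
  split; [|split].
  - intros t Ht eps He. destruct (tail_small (eps / 3)) as [k Hk]; [lra|].
    destruct (fif_iter_vanishing_cont k) as [Hc _].
    destruct (Hc t Ht (eps / 3)) as [d [Hd H']]; [lra|].
    exists d; split; auto. intros s Hs Hst.
    replace (fif_fix s - fif_fix t) with
      ((fif_fix s - fif_iter k s) + (fif_iter k s - fif_iter k t) - (fif_fix t - fif_iter k t)) by ring.
    eapply Rle_lt_trans; [apply Rabs_triang|]. rewrite Rabs_Ropp.
    eapply Rle_lt_trans; [apply Rplus_le_compat_r; apply Rabs_triang|].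
    pose proof (fif_fix_dist k s). pose proof (fif_fix_dist k t). specialize (H' s Hs Hst). lra.
  - apply eq0_of_tail_bound. intros k. pose proof (fif_fix_dist k (- PI)) as UB.
    destruct (fif_iter_vanishing_cont k) as [_ [HZ _]]. rewrite HZ, Rminus_0_r in UB.
    pose proof (tail_nonneg k). lra.
  - apply eq0_of_tail_bound. intros k. pose proof (fif_fix_dist k PI) as UB.
    destruct (fif_iter_vanishing_cont k) as [_ [_ HZ]]. rewrite HZ, Rminus_0_r in UB.
    pose proof (tail_nonneg k). lra.
Qed.

Lemma fif_fix_eq i t : (1 <= i <= N)%nat -> x (i - 1)%nat <= t <= x i ->
  fif_fix t = alpha i * (fif_fix (Linv N x i t) + v (Linv N x i t)).
Proof.
  intros Hi Ht. pose proof a_bounds. set (s := Linv N x i t).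
  assert (fif_fix t - alpha i * (fif_fix s + v s) = 0); [|lra].
  apply eq0_of_tail_bound. intros k.
  assert (E : fif_iter (S k) t = alpha i * (fif_iter k s + v s))
    by (apply fif_op_on_cell; auto; apply fif_iter_vanishing_cont).
  replace (fif_fix t - alpha i * (fif_fix s + v s)) with
    ((fif_fix t - fif_iter (S k) t) - alpha i * (fif_fix s - fif_iter k s)) by (rewrite E; ring).
  eapply Rle_trans; [apply Rabs_triang|]. rewrite Rabs_Ropp, Rabs_mult.
  pose proof (fif_fix_dist (S k) t). pose proof (fif_fix_dist k s). rewrite tail_S in H0.
  pose proof (Rabs_le_alpha_norm alpha N i Hi). pose proof (tail_nonneg k).
  assert (Rabs (alpha i) * Rabs (fif_fix s - fif_iter k s) <= a * tail k)
    by (apply Rmult_le_compat; auto; apply Rabs_pos).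
  nra.
Qed.

End FractalFixedPoint.

Lemma fif_exists N x alpha r b : partition N x ->
  (forall i, (1 <= i <= N)%nat -> -1 < alpha i < 1) ->
  cont_on (- PI) PI r -> cont_on (- PI) PI b -> b (- PI) = r (- PI) -> b PI = r PI ->
  exists g, is_FIF N x alpha r b g.
Proof.
  intros Hp Ha Hr Hb H0 H1.
  set (v := fun t => r t - b t).
  assert (Hv : cont_on (- PI) PI v) by (apply cont_on_minus; auto).
  assert (Hv0 : v (- PI) = 0) by (unfold v; rewrite H0; ring).
  assert (Hv1 : v PI = 0) by (unfold v; rewrite H1; ring).
  exists (fun t => r t + fif_fix N x alpha v Hp Ha Hv t). split.
  - apply cont_on_plus; auto. apply (fif_fix_vanishing_cont N x alpha v Hp Ha Hv Hv0 Hv1).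
  - intros i Hi t Ht. rewrite (fif_fix_eq N x alpha v Hp Ha Hv Hv0 Hv1 i t Hi Ht).
    unfold v. ring.
Qed.

(* [G = ||g - r||] satisfies [G <= |alpha|_oo (G + ||r - b||)]. *)
Lemma fif_dist_le N x alpha r b g V : partition N x ->
  (forall i, (1 <= i <= N)%nat -> -1 < alpha i < 1) ->
  cont_on (- PI) PI r -> (forall s, Ipi s -> Rabs (r s - b s) <= V) ->
  is_FIF N x alpha r b g ->
  forall t, Ipi t -> Rabs (g t - r t) <= alpha_norm alpha N / (1 - alpha_norm alpha N) * V.
Proof.
  intros Hp Ha Hr HV [Hg Heq].
  destruct (alpha_norm_bounds alpha N Ha) as [Ha0 Ha1].
  set (a := alpha_norm alpha N) in *.
  assert (Hb : bounded_Ipi (fun t => g t - r t)) by (apply cont_on_bounded, cont_on_minus; auto).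
  set (G := supnorm (fun t => g t - r t)).
  assert (HG : G <= a * (G + V)).
  { apply supnorm_le. intros t Ht. destruct (partition_cell_exists N x Hp t Ht) as [i [Hi Hti]].
    rewrite (Heq i Hi t Hti). set (s := Linv N x i t).
    assert (Hs : Ipi s) by (apply (Linv_Ipi N x Hp); auto).
    replace (r t + alpha i * (g s - b s) - r t) with (alpha i * ((g s - r s) + (r s - b s))) by ring.
    rewrite Rabs_mult. apply Rmult_le_compat; try apply Rabs_pos; [apply Rabs_le_alpha_norm; auto|].
    eapply Rle_trans; [apply Rabs_triang|].
    pose proof (Rabs_le_supnorm _ s Hb Hs) as E. fold G in E. pose proof (HV s Hs). lra. }
  intros t Ht. pose proof (Rabs_le_supnorm _ t Hb Ht) as H. fold G in H.
  apply Rle_trans with G; [exact H|].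
  apply (Rmult_le_reg_r (1 - a)); [lra|].
  replace (a / (1 - a) * V * (1 - a)) with (a * V) by (field; lra). lra.
Qed.

Lemma C2pi_const c : C2pi (fun _ => c).
Proof. split; [apply cont_on_const|reflexivity]. Qed.

Lemma C2pi_scal c g : C2pi g -> C2pi (fun t => c * g t).
Proof. intros [Hg Hper]. split; [apply cont_on_scal; exact Hg|rewrite Hper; reflexivity]. Qed.

Section AdmissibleOperator.
Variables (N : nat) (x : nat -> R) (L : (R -> R) -> (R -> R)).
Hypothesis HL : admissible_L N x L.

Lemma admissible_L_scal c g : C2pi g -> forall t, Ipi t -> L (fun s => c * g s) t = c * L g t.
Proof.
  destruct HL as [_ [Hcong [Hlin _]]]. intros Hg t Ht.
  rewrite (Hcong _ (fun s => c * g s + 0 * g s) (C2pi_scal c g Hg)); auto.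
  - rewrite Hlin by auto. ring.
  - destruct Hg as [Hg Hper]. split; [|rewrite Hper; reflexivity].
    apply cont_on_ext with (fun s => c * g s); [intros; ring|apply cont_on_scal; exact Hg].
  - intros; ring.
Qed.

Lemma admissible_L_zero g : C2pi g -> (forall t, Ipi t -> g t = 0) ->
  forall t, Ipi t -> L g t = 0.
Proof.
  destruct HL as [_ [Hcong _]]. intros Hg Hz t Ht.
  rewrite (Hcong g (fun s => 0 * g s) Hg (C2pi_scal 0 g Hg)) by (auto; intros; rewrite Hz; auto; ring).
  rewrite admissible_L_scal by auto. ring.
Qed.

Lemma norm_IdmL_bounded :
  exists B, forall y, (exists g, C2pi g /\ supnorm g <= 1 /\
                                 y = supnorm (fun t => g t - L g t)) -> y <= B.
Proof.
  destruct HL as [HC [_ [_ [[M HM] _]]]].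
  exists (1 + Rabs M). intros y [g [Hg [Hs ->]]].
  eapply Rle_trans; [apply supnorm_sub_le; apply C2pi_bounded; auto|].
  specialize (HM g Hg). pose proof (supnorm_nonneg g). pose proof (Rabs_pos M).
  assert (M * supnorm g <= Rabs M * supnorm g) by (apply Rmult_le_compat_r; auto; apply RRle_abs).
  nra.
Qed.

Lemma norm_IdmL_nonneg : 0 <= norm_IdmL L.
Proof.
  apply sup_R_nonneg with (supnorm (fun t => (fun _ => 0) t - L (fun _ => 0) t));
    [|apply supnorm_nonneg].
  exists (fun _ => 0). split; [apply C2pi_const|split; auto].
  apply supnorm_le. intros; rewrite Rabs_R0; lra.
Qed.

Lemma supnorm_sub_L_le r : C2pi r ->
  supnorm (fun t => r t - L r t) <= norm_IdmL L * supnorm r.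
Proof.
  intros Hr. pose proof (supnorm_nonneg r) as Hs0. set (s := supnorm r) in *.
  assert (Hrb : bounded_Ipi r) by (apply C2pi_bounded; auto).
  destruct (Req_dec s 0) as [Hs|Hs].
  - rewrite Hs, Rmult_0_r. apply supnorm_le. intros t Ht.
    assert (Hz : forall u, Ipi u -> r u = 0).
    { intros u Hu. destruct (Req_dec (r u) 0) as [|Hn]; [auto|exfalso].
      pose proof (Rabs_le_supnorm r u Hrb Hu) as Hu'. fold s in Hu'. pose proof (Rabs_pos_lt _ Hn). lra. }
    rewrite Hz, admissible_L_zero by auto. rewrite Rminus_0_r, Rabs_R0. lra.
  - (* apply the definition of the operator norm to the normalized [r / ||r||] *)
    set (g := fun u => / s * r u).
    assert (Hg : C2pi g) by (apply C2pi_scal; auto).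
    assert (Hgs : supnorm g <= 1).
    { apply supnorm_le. intros t Ht. unfold g. rewrite Rabs_mult, Rabs_inv, (Rabs_right s) by lra.
      pose proof (Rabs_le_supnorm r t Hrb Ht) as Ht'. fold s in Ht'.
      apply (Rmult_le_reg_l s); [lra|]. rewrite <- Rmult_assoc, Rinv_r by lra. lra. }
    assert (Hel : supnorm (fun t => g t - L g t) <= norm_IdmL L)
      by (apply le_sup_R; [exists g; auto|apply norm_IdmL_bounded]).
    assert (Hgb : bounded_Ipi (fun t => g t - L g t))
      by (apply bounded_sub; apply C2pi_bounded; auto; apply HL; auto).
    apply supnorm_le. intros t Ht.
    replace (r t - L r t) with (s * (g t - L g t))
      by (unfold g; rewrite admissible_L_scal by auto; field; lra).
    rewrite Rabs_mult, (Rabs_right s) by lra. rewrite Rmult_comm.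
    pose proof (Rabs_le_supnorm _ t Hgb Ht). apply Rmult_le_compat_r; lra.
Qed.

End AdmissibleOperator.

Lemma admissible_L_endpoints N x L g : partition N x -> admissible_L N x L -> C2pi g ->
  L g (- PI) = g (- PI) /\ L g PI = g PI.
Proof.
  intros Hp [_ [_ [_ [_ Hend]]]] Hg.
  rewrite <- (partition_first N x Hp), <- (partition_last N x Hp). apply Hend, Hg.
Qed.

Lemma fif_approx_error N x alpha L f r g E : partition N x ->
  (forall i, (1 <= i <= N)%nat -> -1 < alpha i < 1) -> admissible_L N x L ->
  C2pi f -> C2pi r -> (forall t, Ipi t -> Rabs (f t - r t) <= E) ->
  is_FIF N x alpha r (L r) g ->
  supnorm (fun t => f t - g t) <=
    E + alpha_norm alpha N / (1 - alpha_norm alpha N) * (norm_IdmL L * (supnorm f + E)).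
Proof.
  intros Hp Ha HL Hf Hr HE Hg.
  destruct (alpha_norm_bounds alpha N Ha) as [Ha0 Ha1].
  set (a := alpha_norm alpha N) in *.
  assert (Hc : 0 <= a / (1 - a)) by (apply Rmult_le_pos; [lra|apply Rlt_le, Rinv_0_lt_compat; lra]).
  assert (Hfb : bounded_Ipi f) by (apply C2pi_bounded; auto).
  assert (HVb : bounded_Ipi (fun s => r s - L r s))
    by (apply bounded_sub; apply C2pi_bounded; auto; apply HL; auto).
  assert (Hrn : supnorm r <= supnorm f + E).
  { apply supnorm_le. intros t Ht. pose proof (HE t Ht). pose proof (Rabs_le_supnorm f t Hfb Ht).
    replace (r t) with (f t - (f t - r t)) by ring. eapply Rle_trans; [apply Rabs_triang|].
    rewrite Rabs_Ropp. lra. }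
  assert (HV : supnorm (fun s => r s - L r s) <= norm_IdmL L * (supnorm f + E)).
  { eapply Rle_trans; [apply (supnorm_sub_L_le N x L HL r Hr)|].
    apply Rmult_le_compat_l; [apply norm_IdmL_nonneg|exact Hrn]. }
  pose proof (fif_dist_le N x alpha r (L r) g _ Hp Ha (proj1 Hr)
                (fun s Hs => Rabs_le_supnorm _ s HVb Hs) Hg) as Hgr. fold a in Hgr.
  apply supnorm_le. intros t Ht.
  replace (f t - g t) with ((f t - r t) - (g t - r t)) by ring.
  eapply Rle_trans; [apply Rabs_triang|]. rewrite Rabs_Ropp.
  pose proof (HE t Ht). pose proof (Hgr t Ht).
  assert (a / (1 - a) * supnorm (fun s => r s - L r s) <=
          a / (1 - a) * (norm_IdmL L * (supnorm f + E))) by (apply Rmult_le_compat_l; auto).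
  lra.
Qed.

(** * Trigonometric polynomials *)

Lemma trig_poly_ext m p q : (forall t, p t = q t) -> trig_poly m p -> trig_poly m q.
Proof. intros E [a [b H]]. exists a, b. intros t. rewrite <- E. apply H. Qed.

Lemma trig_poly_add m p q : trig_poly m p -> trig_poly m q -> trig_poly m (fun t => p t + q t).
Proof.
  intros [a1 [b1 H1]] [a2 [b2 H2]]. exists (fun k => a1 k + a2 k), (fun k => b1 k + b2 k).
  intros t. rewrite H1, H2, <- sum_plus. apply sum_eq. intros; ring.
Qed.

Lemma trig_poly_scal m c p : trig_poly m p -> trig_poly m (fun t => c * p t).
Proof.
  intros [a [b H]]. exists (fun k => c * a k), (fun k => c * b k).
  intros t. rewrite H, scal_sum. apply sum_eq. intros; ring.
Qed.

Lemma trig_poly_sum m J (g : nat -> R -> R) : (forall j, (j <= J)%nat -> trig_poly m (g j)) ->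
  trig_poly m (fun t => sum_f_R0 (fun j => g j t) J).
Proof.
  induction J as [|J IH]; intros H; simpl; [apply H; lia|].
  apply trig_poly_add; [apply IH; intros; apply H; lia|apply H; lia].
Qed.

Lemma trig_poly_mono m m' p : (m <= m')%nat -> trig_poly m p -> trig_poly m' p.
Proof.
  intros Hm [a [b H]].
  exists (fun k => if Nat.leb k m then a k else 0), (fun k => if Nat.leb k m then b k else 0).
  intros t. rewrite H. induction Hm as [|m' Hm IH].
  - apply sum_eq. intros i Hi. destruct (Nat.leb_spec i m); auto; lia.
  - cbn [sum_f_R0]. rewrite <- IH. destruct (Nat.leb_spec (S m') m); [lia|ring].
Qed.

Lemma sum_f_R0_indicator (c : nat -> R) k m : (k <= m)%nat ->
  sum_f_R0 (fun j => if Nat.eqb j k then c j else 0) m = c k.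
Proof.
  assert (G : sum_f_R0 (fun j => if Nat.eqb j k then c j else 0) m =
              if Nat.leb k m then c k else 0).
  { induction m as [|m IH]; cbn [sum_f_R0].
    - destruct (Nat.eqb_spec 0 k); destruct (Nat.leb_spec k 0); subst; auto; lia.
    - rewrite IH. destruct (Nat.eqb_spec (S m) k); destruct (Nat.leb_spec k m);
        destruct (Nat.leb_spec k (S m)); subst; try lia; ring. }
  intros Hk. rewrite G. destruct (Nat.leb_spec k m); [reflexivity|lia].
Qed.

Lemma trig_poly_cos m k : (k <= m)%nat -> trig_poly m (fun t => cos (INR k * t)).
Proof.
  intros Hk. exists (fun j => if Nat.eqb j k then 1 else 0), (fun _ => 0).
  intros t. rewrite <- (sum_f_R0_indicator (fun j => cos (INR j * t)) k m Hk).
  apply sum_eq. intros j _. destruct (Nat.eqb j k); ring.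
Qed.

Lemma trig_poly_sin m k : (k <= m)%nat -> trig_poly m (fun t => sin (INR k * t)).
Proof.
  intros Hk. exists (fun _ => 0), (fun j => if Nat.eqb j k then 1 else 0).
  intros t. rewrite <- (sum_f_R0_indicator (fun j => sin (INR j * t)) k m Hk).
  apply sum_eq. intros j _. destruct (Nat.eqb j k); ring.
Qed.

Lemma trig_poly_const m c : trig_poly m (fun _ => c).
Proof.
  apply trig_poly_ext with (fun t => c * cos (INR 0 * t)).
  - intros t. simpl. rewrite Rmult_0_l, cos_0. ring.
  - apply trig_poly_scal, trig_poly_cos; lia.
Qed.

Lemma trig_poly_cos_mul_cos m k : (k <= m)%nat -> trig_poly (S m) (fun t => cos t * cos (INR k * t)).
Proof.
  intros Hk. destruct k as [|k].
  - apply trig_poly_ext with (fun t => cos (INR 1 * t)); [intros; simpl; rewrite Rmult_0_l, cos_0, Rmult_1_l; ring|].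
    apply trig_poly_cos; lia.
  - apply trig_poly_ext with (fun t => /2 * cos (INR (S (S k)) * t) + /2 * cos (INR k * t)).
    + intros t. replace (INR (S (S k)) * t) with (INR (S k) * t + t) by (rewrite (S_INR (S k)); ring).
      replace (INR k * t) with (INR (S k) * t - t) by (rewrite S_INR; ring).
      rewrite cos_plus, cos_minus. field.
    + apply trig_poly_add; apply trig_poly_scal; apply trig_poly_cos; lia.
Qed.

Lemma trig_poly_cos_mul_sin m k : (k <= m)%nat -> trig_poly (S m) (fun t => cos t * sin (INR k * t)).
Proof.
  intros Hk. destruct k as [|k].
  - apply trig_poly_ext with (fun _ => 0); [intros; simpl; rewrite Rmult_0_l, sin_0; ring|].
    apply trig_poly_const.
  - apply trig_poly_ext with (fun t => /2 * sin (INR (S (S k)) * t) + /2 * sin (INR k * t)).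
    + intros t. replace (INR (S (S k)) * t) with (INR (S k) * t + t) by (rewrite (S_INR (S k)); ring).
      replace (INR k * t) with (INR (S k) * t - t) by (rewrite S_INR; ring).
      rewrite sin_plus, sin_minus. field.
    + apply trig_poly_add; apply trig_poly_scal; apply trig_poly_sin; lia.
Qed.

Lemma trig_poly_sin_mul_cos m k : (k <= m)%nat -> trig_poly (S m) (fun t => sin t * cos (INR k * t)).
Proof.
  intros Hk. destruct k as [|k].
  - apply trig_poly_ext with (fun t => sin (INR 1 * t)); [intros; simpl; rewrite Rmult_0_l, cos_0, Rmult_1_l; ring|].
    apply trig_poly_sin; lia.
  - apply trig_poly_ext with (fun t => /2 * sin (INR (S (S k)) * t) + (- /2) * sin (INR k * t)).
    + intros t. replace (INR (S (S k)) * t) with (INR (S k) * t + t) by (rewrite (S_INR (S k)); ring).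
      replace (INR k * t) with (INR (S k) * t - t) by (rewrite S_INR; ring).
      rewrite sin_plus, sin_minus. field.
    + apply trig_poly_add; apply trig_poly_scal; apply trig_poly_sin; lia.
Qed.

Lemma trig_poly_sin_mul_sin m k : (k <= m)%nat -> trig_poly (S m) (fun t => sin t * sin (INR k * t)).
Proof.
  intros Hk. destruct k as [|k].
  - apply trig_poly_ext with (fun _ => 0); [intros; simpl; rewrite Rmult_0_l, sin_0; ring|].
    apply trig_poly_const.
  - apply trig_poly_ext with (fun t => (- /2) * cos (INR (S (S k)) * t) + /2 * cos (INR k * t)).
    + intros t. replace (INR (S (S k)) * t) with (INR (S k) * t + t) by (rewrite (S_INR (S k)); ring).
      replace (INR k * t) with (INR (S k) * t - t) by (rewrite S_INR; ring).
      rewrite cos_plus, cos_minus. field.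
    + apply trig_poly_add; apply trig_poly_scal; apply trig_poly_cos; lia.
Qed.

Lemma trig_poly_mul_cos m p : trig_poly m p -> trig_poly (S m) (fun t => cos t * p t).
Proof.
  intros [a [b H]].
  apply trig_poly_ext with (fun t => sum_f_R0 (fun k =>
    a k * (cos t * cos (INR k * t)) + b k * (cos t * sin (INR k * t))) m).
  - intros t. rewrite H, scal_sum. apply sum_eq. intros; ring.
  - apply trig_poly_sum. intros j Hj. apply trig_poly_add; apply trig_poly_scal;
      [apply trig_poly_cos_mul_cos|apply trig_poly_cos_mul_sin]; auto.
Qed.

Lemma trig_poly_mul_sin m p : trig_poly m p -> trig_poly (S m) (fun t => sin t * p t).
Proof.
  intros [a [b H]].
  apply trig_poly_ext with (fun t => sum_f_R0 (fun k =>
    a k * (sin t * cos (INR k * t)) + b k * (sin t * sin (INR k * t))) m).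
  - intros t. rewrite H, scal_sum. apply sum_eq. intros; ring.
  - apply trig_poly_sum. intros j Hj. apply trig_poly_add; apply trig_poly_scal;
      [apply trig_poly_sin_mul_cos|apply trig_poly_sin_mul_sin]; auto.
Qed.

Lemma trig_poly_mul_deg1 m A B C p : trig_poly m p ->
  trig_poly (S m) (fun t => (A + B * cos t + C * sin t) * p t).
Proof.
  intros H.
  apply trig_poly_ext with (fun t => (A * p t + B * (cos t * p t)) + C * (sin t * p t)); [intros; ring|].
  apply trig_poly_add; [apply trig_poly_add|]; apply trig_poly_scal.
  - apply trig_poly_mono with m; auto.
  - apply trig_poly_mul_cos; auto.
  - apply trig_poly_mul_sin; auto.
Qed.

Lemma prod_f_R0_ext (f g : nat -> R) K :
  (forall k, (k <= K)%nat -> f k = g k) -> prod_f_R0 f K = prod_f_R0 g K.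
Proof.
  induction K as [|K IH]; intros H; simpl; [apply H; lia|].
  rewrite IH, H by (intros; try apply H; lia). reflexivity.
Qed.

Lemma prod_f_R0_nonneg (a : nat -> R) K :
  (forall k, (k <= K)%nat -> 0 <= a k) -> 0 <= prod_f_R0 a K.
Proof.
  induction K as [|K IH]; intros H; simpl; [apply H; lia|].
  apply Rmult_le_pos; [apply IH; intros; apply H; lia|apply H; lia].
Qed.

Lemma prod_f_R0_pos (a : nat -> R) K :
  (forall k, (k <= K)%nat -> 0 < a k) -> 0 < prod_f_R0 a K.
Proof.
  induction K as [|K IH]; intros H; simpl; [apply H; lia|].
  apply Rmult_lt_0_compat; [apply IH; intros; apply H; lia|apply H; lia].
Qed.

Lemma sum_f_R0_nonneg (a : nat -> R) K :
  (forall k, (k <= K)%nat -> 0 <= a k) -> 0 <= sum_f_R0 a K.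
Proof.
  induction K as [|K IH]; intros H; simpl; [apply H; lia|].
  apply Rplus_le_le_0_compat; [apply IH; intros; apply H; lia|apply H; lia].
Qed.

Lemma prod_f_R0_omit (a : nat -> R) j K : (j <= K)%nat ->
  prod_f_R0 (fun k => if Nat.eq_dec k j then 1 else a k) K * a j = prod_f_R0 a K.
Proof.
  induction K as [|K IH]; intros Hj.
  - assert (j = 0%nat) by lia. subst. simpl. ring.
  - cbn [prod_f_R0]. destruct (Nat.eq_dec (S K) j) as [<-|Hne].
    + rewrite (prod_f_R0_ext _ a K); [ring|].
      intros k Hk. destruct (Nat.eq_dec k (S K)); [lia|auto].
    + rewrite <- IH by lia. ring.
Qed.

Lemma sum_f_R0_lin_comb (a b : nat -> R) c1 c2 c3 K :
  sum_f_R0 (fun i => c1 * (c2 * a i + c3 * b i)) K = c1 * (c2 * sum_f_R0 a K + c3 * sum_f_R0 b K).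
Proof. induction K as [|K IH]; simpl; [ring|]. rewrite IH. ring. Qed.

Lemma sum_f_R0_rev (g : nat -> R) K : sum_f_R0 (fun i => g (K - i)%nat) K = sum_f_R0 g K.
Proof.
  induction K as [|K IH]; [reflexivity|].
  rewrite decomp_sum by lia. simpl pred. rewrite Nat.sub_0_r.
  rewrite (sum_eq (fun i => g (S K - S i)%nat) (fun i => g (K - i)%nat)) by (intros; f_equal).
  rewrite IH, tech5. ring.
Qed.

Lemma sum_f_R0_rotate1 (H : nat -> R) M : (0 < M)%nat ->
  sum_f_R0 (fun k => H ((1 + k) mod M)%nat) (M - 1) = sum_f_R0 H (M - 1).
Proof.
  intros HM. destruct M as [|[|M]]; [lia|reflexivity|].
  replace (S (S M) - 1)%nat with (S M) by lia.
  rewrite tech5, (decomp_sum H (S M)) by lia. simpl pred.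
  replace ((1 + S M) mod S (S M))%nat with 0%nat by (rewrite Nat.add_1_l, Nat.Div0.mod_same; reflexivity).
  rewrite (sum_eq (fun k => H ((1 + k) mod S (S M))%nat) (fun i => H (S i))); [ring|].
  intros i Hi. f_equal. rewrite Nat.mod_small by lia. lia.
Qed.

Lemma sum_f_R0_rotate (G : nat -> R) M m : (0 < M)%nat ->
  sum_f_R0 (fun k => G ((m + k) mod M)%nat) (M - 1) = sum_f_R0 G (M - 1).
Proof.
  intros HM. induction m as [|m IH].
  - apply sum_eq. intros i Hi. f_equal. rewrite Nat.add_0_l, Nat.mod_small; lia.
  - rewrite <- IH, <- (sum_f_R0_rotate1 (fun j => G ((m + j) mod M)%nat) M HM).
    apply sum_eq. intros i Hi. f_equal.
    rewrite Nat.Div0.add_mod_idemp_r. f_equal. lia.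
Qed.

Lemma prod_f_R0_rotate1 (H : nat -> R) M : (0 < M)%nat ->
  prod_f_R0 (fun k => H ((1 + k) mod M)%nat) (M - 1) = prod_f_R0 H (M - 1).
Proof.
  intros HM. destruct M as [|[|M]]; [lia|reflexivity|].
  replace (S (S M) - 1)%nat with (S M) by lia.
  assert (D : forall (A : nat -> R) K, prod_f_R0 A (S K) = A 0%nat * prod_f_R0 (fun i => A (S i)) K).
  { intros A K. induction K as [|K IHK]; simpl in *; [ring|]. rewrite IHK. ring. }
  rewrite (D H M).
  change (prod_f_R0 (fun k => H ((1 + k) mod S (S M))%nat) (S M)) with
    (prod_f_R0 (fun k => H ((1 + k) mod S (S M))%nat) M * H ((1 + S M) mod S (S M))%nat).
  replace ((1 + S M) mod S (S M))%nat with 0%nat by (rewrite Nat.add_1_l, Nat.Div0.mod_same; reflexivity).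
  rewrite (prod_f_R0_ext (fun k => H ((1 + k) mod S (S M))%nat) (fun i => H (S i))); [ring|].
  intros i Hi. f_equal. rewrite Nat.mod_small by lia. lia.
Qed.

Lemma prod_f_R0_rotate (G : nat -> R) M m : (0 < M)%nat ->
  prod_f_R0 (fun k => G ((m + k) mod M)%nat) (M - 1) = prod_f_R0 G (M - 1).
Proof.
  intros HM. induction m as [|m IH].
  - apply prod_f_R0_ext. intros i Hi. f_equal. rewrite Nat.add_0_l, Nat.mod_small; lia.
  - rewrite <- IH, <- (prod_f_R0_rotate1 (fun j => G ((m + j) mod M)%nat) M HM).
    apply prod_f_R0_ext. intros i Hi. f_equal.
    rewrite Nat.Div0.add_mod_idemp_r. f_equal. lia.
Qed.

Lemma continuity_pt_sum (g : nat -> R -> R) J t :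
  (forall j, (j <= J)%nat -> continuity_pt (g j) t) ->
  continuity_pt (fun s => sum_f_R0 (fun j => g j s) J) t.
Proof.
  induction J as [|J IH]; intros H; simpl; [apply H; lia|].
  apply (continuity_pt_plus (fun s => sum_f_R0 (fun j => g j s) J) (g (S J)));
    [apply IH; intros; apply H; lia|apply H; lia].
Qed.

Lemma continuity_pt_prod (g : nat -> R -> R) J t :
  (forall j, (j <= J)%nat -> continuity_pt (g j) t) ->
  continuity_pt (fun s => prod_f_R0 (fun j => g j s) J) t.
Proof.
  induction J as [|J IH]; intros H; simpl; [apply H; lia|].
  apply (continuity_pt_mult (fun s => prod_f_R0 (fun j => g j s) J) (g (S J)));
    [apply IH; intros; apply H; lia|apply H; lia].
Qed.

(** * Numerical estimates *)

Lemma INR_fact_IZR k z : Z.of_nat (fact k) = z -> INR (fact k) = IZR z.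
Proof. intros <-. apply INR_IZR_INZ. Qed.

Lemma PI_lt_315 : PI < 315/100.
Proof.
  assert (Hc : cos (1575/1000) < 0).
  { destruct (pre_cos_bound (1575/1000) 1) as [_ H]; [lra|lra|].
    eapply Rle_lt_trans; [apply H|].
    unfold cos_approx, cos_term. cbn [sum_f_R0 Nat.mul Nat.add].
    rewrite (INR_fact_IZR 0 1), (INR_fact_IZR 2 2), (INR_fact_IZR 4 24), (INR_fact_IZR 6 720),
      (INR_fact_IZR 8 40320) by (vm_compute; reflexivity).
    cbn [pow]. lra. }
  destruct (Rlt_le_dec (PI/2) (1575/1000)) as [H|H]; [lra|].
  assert (0 <= cos (1575/1000)) by (apply cos_ge_0; pose proof PI_RGT_0; lra). lra.
Qed.

Definition jordan_c : R := 634/1000.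

(* Since [PI/2 < 1.575], it suffices that [1 - c - z/6 + z^2/120 - z^3/5040 >= 0] for
   [z = y^2 <= 1.575^2]; this cubic is decreasing there. *)
Lemma jordan_sin_lb y : 0 <= y -> y <= PI / 2 -> jordan_c * y <= sin y.
Proof.
  intros H0 H1. pose proof PI_lt_315. pose proof PI_RGT_0.
  destruct (SIN y) as [Hs _]; [lra|lra|].
  eapply Rle_trans; [|apply Hs].
  unfold sin_lb, sin_approx, sin_term. cbn [sum_f_R0 Nat.mul Nat.add].
  rewrite (INR_fact_IZR 1 1), (INR_fact_IZR 3 6), (INR_fact_IZR 5 120), (INR_fact_IZR 7 5040)
    by (vm_compute; reflexivity).
  cbn [pow]. unfold jordan_c.
  set (z := y * y).
  assert (Hz0 : 0 <= z) by (unfold z; nra).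
  assert (Hz1 : z <= 2480625/1000000) by (unfold z; nra).
  set (Z := 2480625/1000000).
  assert (Hp : 0 <= (1 - 634/1000) - z / 6 + z * z / 120 - z * z * z / 5040).
  { assert (HZ : 0 <= (1 - 634/1000) - Z / 6 + Z * Z / 120 - Z * Z * Z / 5040) by (unfold Z; lra).
    assert (0 <= (Z - z) * (1/6 - (z + Z) / 120 + (z * z + z * Z + Z * Z) / 5040))
      by (apply Rmult_le_pos; unfold Z in *; nra).
    replace ((1 - 634/1000) - z / 6 + z * z / 120 - z * z * z / 5040) with
      (((1 - 634/1000) - Z / 6 + Z * Z / 120 - Z * Z * Z / 5040) +
       (Z - z) * (1/6 - (z + Z) / 120 + (z * z + z * Z + Z * Z) / 5040)) by field.
    lra. }
  match goal with |- _ <= ?rhs =>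
    replace rhs with (634 / 1000 * y + y * ((1 - 634/1000) - z / 6 + z * z / 120 - z * z * z / 5040))
      by (unfold z; field) end.
  nra.
Qed.

Lemma Rdiv_le_Rdiv a b c d : 0 <= a -> a <= b -> 0 < c -> c <= d -> a / d <= b / c.
Proof.
  intros. unfold Rdiv. apply Rmult_le_compat; auto.
  - apply Rlt_le, Rinv_0_lt_compat; lra.
  - apply Rinv_le_contravar; auto.
Qed.

(* Telescoping: [1/(k+1)^3 <= 1/(2k(k+1)) - 1/(2(k+1)(k+2))]. *)
Lemma sum_inv_cube_le_aux K : (1 <= K)%nat ->
  sum_f_R0 (fun k => 1 / INR (S k) ^ 3) K <= 29/24 - 1 / (2 * (INR K + 1) * (INR K + 2)).
Proof.
  induction K as [|K IH]; intros HK; [lia|].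
  destruct (Nat.eq_dec K 0) as [->|HK0]; [simpl; lra|].
  rewrite tech5. specialize (IH ltac:(lia)). rewrite !S_INR in *.
  set (y := INR K) in *. assert (Hy : 0 <= y) by apply pos_INR.
  assert (E : 1 / (2 * (y + 1) * (y + 2)) - 1 / (2 * (y + 1 + 1) * (y + 1 + 2)) - 1 / (y + 1 + 1) ^ 3
            = 1 / ((y + 1) * (y + 2) ^ 3 * (y + 3))) by (field; repeat split; lra).
  assert (0 < 1 / ((y + 1) * (y + 2) ^ 3 * (y + 3))).
  { apply Rdiv_lt_0_compat; [lra|]. pose proof (pow_lt (y + 2) 3 ltac:(lra)). repeat apply Rmult_lt_0_compat; lra. }
  lra.
Qed.

Lemma sum_inv_cube_le K : sum_f_R0 (fun k => 1 / INR (S k) ^ 3) K <= 29/24.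
Proof.
  destruct K as [|K]; [simpl; lra|].
  pose proof (sum_inv_cube_le_aux (S K) ltac:(lia)). pose proof (pos_INR (S K)).
  assert (0 < 1 / (2 * (INR (S K) + 1) * (INR (S K) + 2)))
    by (apply Rdiv_lt_0_compat; [lra|repeat apply Rmult_lt_0_compat; lra]).
  lra.
Qed.

Lemma sum_inv_cube_from2_le K : sum_f_R0 (fun k => 1 / INR (S (S k)) ^ 3) K <= 5/24.
Proof.
  pose proof (sum_inv_cube_le (S K)) as H. rewrite decomp_sum in H by lia. simpl pred in H.
  replace (1 / INR 1 ^ 3) with 1 in H by (simpl; field). lra.
Qed.

(* Bound on [(y / dl) (sin (e/2) / sin (y/2))^4] from Jordan's inequality, for the
   nodes at distance [y > dl]. *)
Definition far_weight (e dl y : R) : R :=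
  if Rlt_dec dl y then (e / jordan_c) ^ 4 / (dl * y ^ 3) else 0.

Lemma jordan_c_pos : 0 < jordan_c. Proof. unfold jordan_c; lra. Qed.

Lemma far_weight_nonneg e dl y : 0 < dl -> 0 <= far_weight e dl y.
Proof.
  intros H. unfold far_weight. destruct (Rlt_dec dl y); [|lra].
  apply Rmult_le_pos; [replace 4%nat with (2 * 2)%nat by reflexivity; rewrite pow_mult; apply pow2_ge_0|].
  apply Rlt_le, Rinv_0_lt_compat, Rmult_lt_0_compat; [lra|apply pow_lt; lra].
Qed.

Lemma pow4_nonneg y : 0 <= y ^ 4.
Proof. replace (y ^ 4) with ((y ^ 2) ^ 2) by ring. apply pow2_ge_0. Qed.

Lemma far_weight_le e dl y z : 0 < dl -> 0 < z -> z <= y ->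
  far_weight e dl y <= (e / jordan_c) ^ 4 / (dl * z ^ 3).
Proof.
  intros Hd Hz Hzy. pose proof (pow4_nonneg (e / jordan_c)).
  assert (0 < dl * z ^ 3) by (apply Rmult_lt_0_compat; [lra|apply pow_lt; lra]).
  unfold far_weight. destruct (Rlt_dec dl y).
  - apply Rdiv_le_Rdiv; auto; try lra. apply Rmult_le_compat_l; [lra|]. apply pow_incr; lra.
  - apply Rmult_le_pos; auto. apply Rlt_le, Rinv_0_lt_compat; auto.
Qed.

Section FarWeightSums.
Variables (e dl h : R) (K : nat).
Hypothesis Hdl : 0 < dl.
Hypothesis Hh : 0 < h.
Hypothesis He0 : 0 <= e.
Hypothesis He : e <= h / 2.

Let A0 := (e / jordan_c) ^ 4 / (dl * h ^ 3).

Lemma far_weight_unit (c : R) : 0 < c -> (e / jordan_c) ^ 4 / (dl * (c * h) ^ 3) = / c ^ 3 * A0.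
Proof. intros. unfold A0, jordan_c. field. repeat split; lra. Qed.

Lemma far_weight_sum_plus_le :
  sum_f_R0 (fun k => far_weight e dl (INR (S k) * h + e)) K <= 29/24 * A0.
Proof.
  assert (HA0 : 0 <= A0).
  { apply Rmult_le_pos; [apply pow4_nonneg|].
    apply Rlt_le, Rinv_0_lt_compat, Rmult_lt_0_compat; [lra|apply pow_lt; lra]. }
  apply Rle_trans with (sum_f_R0 (fun k => 1 / INR (S k) ^ 3 * A0) K).
  - apply sum_Rle. intros k _. pose proof (lt_0_INR (S k) ltac:(lia)).
    eapply Rle_trans; [apply (far_weight_le e dl _ (INR (S k) * h)); nra|].
    rewrite far_weight_unit by lra. right. field. lra.
  - rewrite <- scal_sum. pose proof (sum_inv_cube_le K). nra.
Qed.

(* For [k >= 1], [(k + 1) h - e >= 3/4 (k + 1) h] since [e <= h/2]. *)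
Lemma far_weight_sum_minus_le :
  sum_f_R0 (fun k => far_weight e dl (INR (S k) * h - e)) K <=
  far_weight e dl (h - e) + 40/81 * A0.
Proof.
  assert (HA0 : 0 <= A0).
  { apply Rmult_le_pos; [apply pow4_nonneg|].
    apply Rlt_le, Rinv_0_lt_compat, Rmult_lt_0_compat; [lra|apply pow_lt; lra]. }
  destruct K as [|K']; [simpl; replace (1 * h - e) with (h - e) by ring; lra|].
  rewrite decomp_sum by lia. simpl pred. replace (INR 1 * h - e) with (h - e) by (simpl; ring).
  apply Rplus_le_compat_l.
  apply Rle_trans with (sum_f_R0 (fun k => 1 / INR (S (S k)) ^ 3 * (64/27 * A0)) K').
  - apply sum_Rle. intros k _. pose proof (pos_INR k). rewrite !S_INR.
    eapply Rle_trans; [apply (far_weight_le e dl _ (3/4 * (INR k + 1 + 1) * h)); nra|].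
    replace (3 / 4 * (INR k + 1 + 1) * h) with ((3 / 4 * (INR k + 1 + 1)) * h) by ring.
    rewrite far_weight_unit by lra. right. field. lra.
  - rewrite <- scal_sum. pose proof (sum_inv_cube_from2_le K'). nra.
Qed.

(* With [u = e/h <= 1/2] and [h/dl <= 2500/1732], [A0 = u^4 (h/dl) / c^4]; if the nearest
   node on the left is far ([dl < h - e]) then even [u <= 0.3072]. *)
Lemma far_weight_sums_le_1 : 1732 * h <= 2500 * dl ->
  sum_f_R0 (fun k => far_weight e dl (INR (S k) * h - e)) K +
  sum_f_R0 (fun k => far_weight e dl (INR (S k) * h + e)) K <= 1.
Proof.
  intros Hr.
  eapply Rle_trans;
    [apply Rplus_le_compat; [apply far_weight_sum_minus_le|apply far_weight_sum_plus_le]|].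
  set (u := e / h). set (rho := h / dl).
  assert (Hc4 : jordan_c ^ 4 = 161568625936/1000000000000) by (unfold jordan_c; field).
  assert (Hu0 : 0 <= u) by (apply Rmult_le_pos; [lra|apply Rlt_le, Rinv_0_lt_compat; lra]).
  assert (Hu1 : u <= 1/2) by (apply (Rmult_le_reg_r h); [lra|unfold u; field_simplify; lra]).
  assert (Hrho : 0 < rho <= 2500 / 1732).
  { split; [apply Rdiv_lt_0_compat; lra|].
    apply (Rmult_le_reg_r dl); [lra|unfold rho; field_simplify; lra]. }
  assert (HA0 : A0 = u ^ 4 * rho / jordan_c ^ 4) by (unfold A0, u, rho, jordan_c; field; lra).
  assert (HA0b : forall U, u <= U -> A0 <= U ^ 4 * (2500/1732) / jordan_c ^ 4).
  { intros U HU. rewrite HA0. unfold Rdiv. rewrite Hc4. apply Rmult_le_compat_r; [lra|].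
    apply Rmult_le_compat; [apply pow_le; lra|lra|apply pow_incr; lra|lra]. }
  unfold far_weight at 1. destruct (Rlt_dec dl (h - e)) as [Hc|Hc].
  - assert (Hu2 : u <= 3072/10000)
      by (apply (Rmult_le_reg_r h); [lra|unfold u; field_simplify; lra]).
    assert (HP : (e / jordan_c) ^ 4 / (dl * (h - e) ^ 3) = A0 / (1 - u) ^ 3)
      by (unfold A0, u, jordan_c; field; repeat split; lra).
    rewrite HP. specialize (HA0b _ Hu2). rewrite Hc4 in HA0b.
    assert (A0 / (1 - u) ^ 3 <= A0 / (6928/10000) ^ 3)
      by (apply Rdiv_le_Rdiv; [rewrite HA0; apply Rmult_le_pos; [apply Rmult_le_pos; [apply pow_le|]|rewrite Hc4]; lra|lra|lra|apply pow_incr; lra]).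
    assert ((3072/10000) ^ 4 * (2500/1732) / (161568625936 / 1000000000000) <= 8/100)
      by (field_simplify; lra).
    assert (A0 / (6928/10000) ^ 3 <= 24/100) by (apply (Rmult_le_reg_r ((6928/10000) ^ 3)); [lra|field_simplify; lra]).
    lra.
  - specialize (HA0b (1/2) Hu1). rewrite Hc4 in HA0b.
    assert ((1/2) ^ 4 * (2500/1732) / (161568625936 / 1000000000000) <= 5585/10000)
      by (field_simplify; lra).
    lra.
Qed.

End FarWeightSums.

Lemma sin_pow2_shift_PI y q : sin (y + PI * INR q) ^ 2 = sin y ^ 2.
Proof.
  induction q as [|q IH]; [simpl; rewrite Rmult_0_r, Rplus_0_r; reflexivity|].
  rewrite S_INR. replace (y + PI * (INR q + 1)) with ((y + PI * INR q) + PI) by ring.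
  rewrite neg_sin, <- IH. ring.
Qed.

Lemma sin_pow2_opp y : sin (- y) ^ 2 = sin y ^ 2.
Proof. rewrite sin_neg. ring. Qed.

Lemma sin_pow2_PI_sub y : sin (PI - y) ^ 2 = sin y ^ 2.
Proof. rewrite sin_PI_x. reflexivity. Qed.

Lemma sin_bound_id y : 0 <= y -> y <= PI -> 0 <= sin y <= y.
Proof.
  intros H0 H1. split; [apply sin_ge_0; auto|].
  destruct (Req_dec y 0) as [->|Hne]; [rewrite sin_0; lra|]. left. apply sin_lt_x. lra.
Qed.

Lemma sqrt3_ge_1732 : 1732 / 1000 <= sqrt 3.
Proof. rewrite <- (sqrt_square (1732/1000)) by lra. apply sqrt_le_1_alt. lra. Qed.

(** * The Jackson-type rational approximant *)

Definition num_nodes (n : nat) : nat := (n / 2 + 1)%nat.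
Definition node_step (n : nat) : R := 2 * PI / INR (num_nodes n).
Definition node (n j : nat) : R := - PI + INR j * node_step n.
Definition sin2_node (n k : nat) (t : R) : R := sin ((t - node n k) / 2) ^ 2.
Definition jackson_weight (n j : nat) (t : R) : R :=
  prod_f_R0 (fun k => if Nat.eq_dec k j then 1 else sin2_node n k t ^ 2) (num_nodes n - 1).
Definition jackson_den (n : nat) (t : R) : R :=
  sum_f_R0 (fun j => jackson_weight n j t) (num_nodes n - 1).
Definition jackson_num (n : nat) (f : R -> R) (t : R) : R :=
  sum_f_R0 (fun j => f (node n j) * jackson_weight n j t) (num_nodes n - 1).
Definition jackson_rat (n : nat) (f : R -> R) (t : R) : R := jackson_num n f t / jackson_den n t.
Definition jackson_delta (n : nat) : R := 2 * PI * sqrt 3 / (INR n + 2).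

Lemma num_nodes_ge2 n : (2 <= n)%nat -> (2 <= num_nodes n)%nat.
Proof.
  intros. unfold num_nodes.
  pose proof (Nat.div_mod n 2 ltac:(lia)); pose proof (Nat.mod_upper_bound n 2 ltac:(lia)). lia.
Qed.

Lemma num_nodes_degree n : (2 * (num_nodes n - 1) <= n)%nat.
Proof.
  unfold num_nodes.
  pose proof (Nat.div_mod n 2 ltac:(lia)); pose proof (Nat.mod_upper_bound n 2 ltac:(lia)). lia.
Qed.

Lemma num_nodes_ratio n : (2 <= n)%nat -> (2 * (n + 2) <= 5 * num_nodes n)%nat.
Proof.
  intros. unfold num_nodes.
  pose proof (Nat.div_mod n 2 ltac:(lia)); pose proof (Nat.mod_upper_bound n 2 ltac:(lia)). lia.
Qed.

Lemma INR_num_nodes_pos n : (2 <= n)%nat -> 0 < INR (num_nodes n).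
Proof. intros. apply lt_0_INR. pose proof (num_nodes_ge2 n H). lia. Qed.

Lemma node_step_pos n : (2 <= n)%nat -> 0 < node_step n.
Proof.
  intros. apply Rdiv_lt_0_compat; [pose proof PI_RGT_0; lra|apply INR_num_nodes_pos; auto].
Qed.

Lemma num_nodes_mul_step n : (2 <= n)%nat -> INR (num_nodes n) * node_step n = 2 * PI.
Proof. intros. unfold node_step. field. apply Rgt_not_eq, INR_num_nodes_pos; auto. Qed.

Lemma jackson_delta_pos n : 0 < jackson_delta n.
Proof.
  unfold jackson_delta. apply Rdiv_lt_0_compat.
  - pose proof PI_RGT_0. pose proof Rlt_sqrt3_0. nra.
  - pose proof (pos_INR n). lra.
Qed.

(* [h / delta = 2 (n + 2) / (sqrt 3 * 2 M) <= 5 / (2 sqrt 3) < 2500 / 1732] *)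
Lemma node_step_le_delta n : (2 <= n)%nat -> 1732 * node_step n <= 2500 * jackson_delta n.
Proof.
  intros Hn. pose proof (INR_num_nodes_pos n Hn) as HM. pose proof (pos_INR n) as Hn0.
  pose proof sqrt3_ge_1732. pose proof PI_RGT_0.
  assert (Hnat : 2 * (INR n + 2) <= 5 * INR (num_nodes n)).
  { pose proof (num_nodes_ratio n Hn) as HH. apply le_INR in HH.
    rewrite !mult_INR, plus_INR in HH. simpl in HH. lra. }
  unfold node_step, jackson_delta.
  replace (1732 * (2 * PI / INR (num_nodes n))) with
    ((2 * PI) * (1732 * (INR n + 2)) / (INR (num_nodes n) * (INR n + 2))) by (field; lra).
  replace (2500 * (2 * PI * sqrt 3 / (INR n + 2))) with
    ((2 * PI) * (2500 * sqrt 3 * INR (num_nodes n)) / (INR (num_nodes n) * (INR n + 2))) by (field; lra).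
  unfold Rdiv. apply Rmult_le_compat_r; [apply Rlt_le, Rinv_0_lt_compat; nra|].
  apply Rmult_le_compat_l; [lra|]. nra.
Qed.

Lemma node_Ipi n j : (2 <= n)%nat -> (j < num_nodes n)%nat -> Ipi (node n j).
Proof.
  intros Hn Hj. unfold node, Ipi.
  pose proof (node_step_pos n Hn). pose proof (num_nodes_mul_step n Hn). pose proof (pos_INR j).
  assert (INR j + 1 <= INR (num_nodes n)) by (rewrite <- S_INR; apply le_INR; lia).
  split; nra.
Qed.

Lemma sin2_node_deg1 n k t :
  sin2_node n k t = / 2 + (- cos (node n k) / 2) * cos t + (- sin (node n k) / 2) * sin t.
Proof.
  unfold sin2_node. set (y := (t - node n k) / 2).
  assert (H : cos (2 * y) = 1 - 2 * sin y * sin y) by apply cos_2a_sin.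
  replace (2 * y) with (t - node n k) in H by (unfold y; field). rewrite cos_minus in H.
  simpl. lra.
Qed.

Lemma trig_poly_mul_sin2_node_sqr n k m p : trig_poly m p ->
  trig_poly (S (S m)) (fun t => sin2_node n k t ^ 2 * p t).
Proof.
  intros H. set (q := fun t => / 2 + (- cos (node n k) / 2) * cos t + (- sin (node n k) / 2) * sin t).
  apply trig_poly_ext with (fun t => q t * (q t * p t)).
  - intros t. unfold q. rewrite <- sin2_node_deg1. ring.
  - apply trig_poly_mul_deg1, trig_poly_mul_deg1, H.
Qed.

Lemma trig_poly_prod_sin2_node n K :
  trig_poly (2 * S K) (fun t => prod_f_R0 (fun k => sin2_node n k t ^ 2) K).
Proof.
  induction K as [|K IH].
  - apply trig_poly_ext with (fun t => sin2_node n 0 t ^ 2 * 1); [intros; simpl; ring|].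
    apply trig_poly_mul_sin2_node_sqr, trig_poly_const.
  - replace (2 * S (S K))%nat with (S (S (2 * S K))) by lia.
    apply trig_poly_ext with (fun t => sin2_node n (S K) t ^ 2 * prod_f_R0 (fun k => sin2_node n k t ^ 2) K);
      [intros; simpl; ring|].
    apply trig_poly_mul_sin2_node_sqr; auto.
Qed.

Lemma trig_poly_prod_sin2_node_omit n j K : (j <= K)%nat ->
  trig_poly (2 * K) (fun t => prod_f_R0 (fun k => if Nat.eq_dec k j then 1 else sin2_node n k t ^ 2) K).
Proof.
  induction K as [|K IH]; intros Hj.
  - assert (j = 0%nat) by lia. subst. apply trig_poly_ext with (fun _ => 1); [reflexivity|apply trig_poly_const].
  - destruct (Nat.eq_dec j (S K)) as [->|Hne].
    + apply trig_poly_ext with (fun t => prod_f_R0 (fun k => sin2_node n k t ^ 2) K);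
        [|apply trig_poly_prod_sin2_node].
      intros t. cbn [prod_f_R0]. destruct (Nat.eq_dec (S K) (S K)); [|lia]. rewrite Rmult_1_r.
      apply prod_f_R0_ext. intros k Hk. destruct (Nat.eq_dec k (S K)); [lia|auto].
    + replace (2 * S K)%nat with (S (S (2 * K))) by lia.
      apply trig_poly_ext with (fun t => sin2_node n (S K) t ^ 2 *
                 prod_f_R0 (fun k => if Nat.eq_dec k j then 1 else sin2_node n k t ^ 2) K).
      * intros t. cbn [prod_f_R0]. destruct (Nat.eq_dec (S K) j); [lia|]. ring.
      * apply trig_poly_mul_sin2_node_sqr, IH. lia.
Qed.

Lemma trig_poly_jackson_weight n j : (j <= num_nodes n - 1)%nat -> trig_poly n (jackson_weight n j).
Proof.
  intros Hj. apply trig_poly_mono with (2 * (num_nodes n - 1))%nat; [apply num_nodes_degree|].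
  apply trig_poly_prod_sin2_node_omit; auto.
Qed.

Lemma trig_poly_jackson_den n : trig_poly n (jackson_den n).
Proof. apply trig_poly_sum. intros j Hj. apply trig_poly_jackson_weight; auto. Qed.

Lemma trig_poly_jackson_num n f : trig_poly n (jackson_num n f).
Proof.
  apply trig_poly_sum. intros j Hj. apply trig_poly_scal, trig_poly_jackson_weight; auto.
Qed.

Lemma continuity_pt_jackson_weight n j t : continuity_pt (jackson_weight n j) t.
Proof.
  apply (continuity_pt_prod (fun k s => if Nat.eq_dec k j then 1 else sin2_node n k s ^ 2)).
  intros k _. destruct (Nat.eq_dec k j); [apply continuity_pt_const; intros a b; auto|].
  unfold sin2_node. reg.
Qed.

Lemma continuity_pt_jackson_den n t : continuity_pt (jackson_den n) t.
Proof.
  apply (continuity_pt_sum (fun j s => jackson_weight n j s)). intros; apply continuity_pt_jackson_weight.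
Qed.

Lemma continuity_pt_jackson_num n f t : continuity_pt (jackson_num n f) t.
Proof.
  apply (continuity_pt_sum (fun j s => f (node n j) * jackson_weight n j s)). intros.
  apply (continuity_pt_mult (fun _ => f (node n j)) (jackson_weight n j));
    [apply continuity_pt_const; intros a b; auto|apply continuity_pt_jackson_weight].
Qed.

Lemma jackson_weight_periodic n j : jackson_weight n j (- PI) = jackson_weight n j PI.
Proof.
  apply prod_f_R0_ext. intros k _. destruct (Nat.eq_dec k j); auto.
  unfold sin2_node. replace ((PI - node n k) / 2) with ((- PI - node n k) / 2 + PI * INR 1) by (simpl; field).
  rewrite sin_pow2_shift_PI. reflexivity.
Qed.

Lemma jackson_den_periodic n : jackson_den n (- PI) = jackson_den n PI.
Proof. apply sum_eq. intros; apply jackson_weight_periodic. Qed.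

Lemma jackson_num_periodic n f : jackson_num n f (- PI) = jackson_num n f PI.
Proof. apply sum_eq. intros; rewrite jackson_weight_periodic; auto. Qed.

Lemma nearest_node n t : (2 <= n)%nat -> Ipi t ->
  exists m0, (m0 <= num_nodes n)%nat /\ Rabs (t - (- PI + INR m0 * node_step n)) <= node_step n / 2.
Proof.
  intros Hn Ht. pose proof (node_step_pos n Hn) as Hh. pose proof (num_nodes_mul_step n Hn) as HM.
  set (h := node_step n) in *. set (M := num_nodes n) in *.
  set (u := (t + PI) / h).
  assert (Hu0 : 0 <= u) by (unfold u, Ipi in *; apply Rmult_le_pos; [lra|apply Rlt_le, Rinv_0_lt_compat; lra]).
  assert (Hu1 : u <= INR M)
    by (unfold u; apply (Rmult_le_reg_r h); [lra|unfold Ipi in *; field_simplify; lra]).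
  destruct (archimed (u - 1/2)) as [A1 A2].
  set (z := up (u - 1/2)) in *.
  assert (Hz : (0 <= z)%Z) by (assert (IZR (-1) < IZR z) by (simpl; lra); apply lt_IZR in H; lia).
  exists (Z.to_nat z).
  assert (HI : INR (Z.to_nat z) = IZR z) by (rewrite INR_IZR_INZ, Z2Nat.id; auto).
  split.
  - destruct (le_lt_dec (Z.to_nat z) M) as [|Hlt]; auto. exfalso.
    apply le_INR in Hlt. rewrite S_INR, HI in Hlt. lra.
  - rewrite HI. replace (t - (- PI + IZR z * h)) with ((u - IZR z) * h) by (unfold u; field; lra).
    rewrite Rabs_mult, (Rabs_right h) by lra.
    assert (Rabs (u - IZR z) <= 1/2) by (unfold Rabs; destruct Rcase_abs; lra).
    nra.
Qed.

Lemma node_mod n m0 k : (2 <= n)%nat -> (m0 <= num_nodes n)%nat -> (k < num_nodes n)%nat ->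
  exists q, (q <= 1)%nat /\
    node n ((m0 + k) mod num_nodes n) = - PI + INR m0 * node_step n + INR k * node_step n - 2 * PI * INR q.
Proof.
  intros Hn Hm Hk. pose proof (num_nodes_ge2 n Hn). set (M := num_nodes n) in *.
  exists ((m0 + k) / M)%nat. split.
  - assert ((m0 + k) / M < 2)%nat by (apply Nat.Div0.div_lt_upper_bound; lia). lia.
  - pose proof (Nat.div_mod (m0 + k) M ltac:(lia)) as E.
    apply (f_equal INR) in E. rewrite plus_INR, plus_INR, mult_INR in E.
    unfold node. rewrite <- (num_nodes_mul_step n Hn). fold M.
    replace (INR ((m0 + k) mod M)) with (INR m0 + INR k - INR M * INR ((m0 + k) / M)) by lra.
    ring.
Qed.

(* Fix [t] and the nearest node [t_(m0)]; reindex the nodes cyclically from [m0], so that the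
   [k]-th node lies at signed distance [k h - tau] (modulo [2 PI]) from [t]. *)
Section PointwiseError.
Variables (f : R -> R) (n : nat) (t : R) (m0 : nat).
Hypothesis Hf : C2pi f.
Hypothesis Hn : (2 <= n)%nat.
Hypothesis Ht : Ipi t.
Hypothesis Hm0 : (m0 <= num_nodes n)%nat.
Hypothesis Hnear : Rabs (t - (- PI + INR m0 * node_step n)) <= node_step n / 2.

Let M := num_nodes n.
Let h := node_step n.
Let tau := t - (- PI + INR m0 * h).
Let e := Rabs tau.
Let dl := jackson_delta n.
Let w := modcont f dl.
Let J (k : nat) : nat := ((m0 + k) mod M)%nat.

Let M_ge2 : (2 <= M)%nat. Proof. apply num_nodes_ge2; auto. Qed.
Let h_pos : 0 < h. Proof. apply node_step_pos; auto. Qed.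
Let M_mul_h : INR M * h = 2 * PI. Proof. apply num_nodes_mul_step; auto. Qed.
Let dl_pos : 0 < dl. Proof. apply jackson_delta_pos. Qed.
Let w_nonneg : 0 <= w. Proof. apply modcont_nonneg; lra. Qed.
Let tau_le : Rabs tau <= h / 2. Proof. exact Hnear. Qed.
Let h_half_le_dl : h / 2 <= dl.
Proof. pose proof (node_step_le_delta n Hn). fold h dl in H. lra. Qed.

Let rot_index_lt k : (J k < M)%nat.
Proof. apply Nat.mod_upper_bound. lia. Qed.

Let node_rot k : (k < M)%nat ->
  exists q, (q <= 1)%nat /\ t - node n (J k) = tau - INR k * h + 2 * PI * INR q.
Proof.
  intros Hk. destruct (node_mod n m0 k Hn Hm0 Hk) as [q [Hq E]].
  exists q. split; auto. unfold J, tau, h, M. rewrite E. ring.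
Qed.

Let sin2_node_rot k : (k < M)%nat -> sin2_node n (J k) t = sin ((tau - INR k * h) / 2) ^ 2.
Proof.
  intros Hk. destruct (node_rot k Hk) as [q [_ E]]. unfold sin2_node. rewrite E.
  replace ((tau - INR k * h + 2 * PI * INR q) / 2) with ((tau - INR k * h) / 2 + PI * INR q) by field.
  apply sin_pow2_shift_PI.
Qed.

Let sin2_node_rot0 : sin2_node n (J 0) t = sin (e / 2) ^ 2.
Proof.
  rewrite sin2_node_rot by lia. simpl INR. rewrite Rmult_0_l, Rminus_0_r.
  unfold e, Rabs. destruct (Rcase_abs tau); auto.
  replace (- tau / 2) with (- (tau / 2)) by field. rewrite sin_pow2_opp. reflexivity.
Qed.

Let gap (k : nat) : R := INR k * h - tau.
Let gap_circ (k : nat) : R := Rmin (gap k) (2 * PI - gap k).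

Let rot_gap_bounds k : (1 <= k < M)%nat -> h / 2 <= gap k < 2 * PI.
Proof.
  intros Hk.
  assert (1 <= INR k) by (replace 1 with (INR 1) by reflexivity; apply le_INR; lia).
  assert (INR k + 1 <= INR M) by (rewrite <- S_INR; apply le_INR; lia).
  assert (Rabs tau >= - tau /\ Rabs tau >= tau) by (unfold Rabs; destruct Rcase_abs; lra).
  unfold gap. split; nra.
Qed.

Let sin2_node_rot_pos k : (1 <= k < M)%nat -> 0 < sin2_node n (J k) t.
Proof.
  intros Hk. rewrite sin2_node_rot by lia. destruct (rot_gap_bounds k Hk). unfold gap in *.
  replace ((tau - INR k * h) / 2) with (- ((INR k * h - tau) / 2)) by field. rewrite sin_pow2_opp.
  apply pow_lt, sin_gt_0; lra.
Qed.

Let jackson_weight_nonneg j : 0 <= jackson_weight n j t.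
Proof.
  apply prod_f_R0_nonneg. intros k _. destruct (Nat.eq_dec k j); [lra|apply pow2_ge_0].
Qed.

Let jackson_weight_rot0_pos : 0 < jackson_weight n (J 0) t.
Proof.
  unfold jackson_weight. fold M.
  rewrite <- (prod_f_R0_rotate _ M m0) by lia.
  apply prod_f_R0_pos. intros k Hk. fold (J k).
  destruct (Nat.eq_dec (J k) (J 0)) as [E|Hne]; [lra|].
  destruct (Nat.eq_dec k 0) as [->|Hk0]; [contradiction|].
  apply pow_lt, sin2_node_rot_pos. lia.
Qed.

Let jackson_den_rot : jackson_den n t = sum_f_R0 (fun k => jackson_weight n (J k) t) (M - 1).
Proof. symmetry. apply (sum_f_R0_rotate (fun j => jackson_weight n j t) M m0). lia. Qed.

Let jackson_den_split :
  jackson_den n t = jackson_weight n (J 0) t + sum_f_R0 (fun i => jackson_weight n (J (S i)) t) (M - 2).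
Proof.
  rewrite jackson_den_rot, decomp_sum by lia. replace (pred (M - 1)) with (M - 2)%nat by lia.
  reflexivity.
Qed.

Lemma jackson_den_pos : 0 < jackson_den n t.
Proof.
  rewrite jackson_den_split. pose proof jackson_weight_rot0_pos.
  assert (0 <= sum_f_R0 (fun i => jackson_weight n (J (S i)) t) (M - 2))
    by (apply sum_f_R0_nonneg; intros; apply jackson_weight_nonneg).
  lra.
Qed.

(* [W_j] times its own missing factor is the full product, independent of [j]. *)
Let jackson_weight_rot_ratio k : (1 <= k < M)%nat ->
  jackson_weight n (J k) t * sin2_node n (J k) t ^ 2 = jackson_weight n (J 0) t * sin (e / 2) ^ 4.
Proof.
  intros Hk. unfold jackson_weight. fold M.
  rewrite (prod_f_R0_omit (fun i => sin2_node n i t ^ 2) (J k) (M - 1)) by (pose proof (rot_index_lt k); lia).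
  replace (sin (e / 2) ^ 4) with (sin2_node n (J 0) t ^ 2) by (rewrite sin2_node_rot0; ring).
  rewrite (prod_f_R0_omit (fun i => sin2_node n i t ^ 2) (J 0) (M - 1)) by (pose proof (rot_index_lt 0); lia).
  reflexivity.
Qed.

Let circ_dist_node_rot k : (1 <= k < M)%nat ->
  circ_dist (node n (J k)) t = gap_circ k.
Proof.
  intros Hk. destruct (rot_gap_bounds k Hk). unfold circ_dist, gap_circ, gap in *.
  destruct (node_rot k ltac:(lia)) as [q [Hq E]]. rewrite E.
  destruct q as [|[|q]]; try lia; simpl INR.
  - rewrite Rmult_0_r, Rplus_0_r, Rabs_left by lra.
    replace (- (tau - INR k * h)) with (INR k * h - tau) by ring. reflexivity.
  - rewrite Rabs_right by lra. rewrite Rmin_comm. f_equal; ring.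
Qed.

Let e_le_PI : e <= PI.
Proof.
  assert (2 <= INR M) by (replace 2 with (INR 2) by reflexivity; apply le_INR, M_ge2).
  unfold e. nra.
Qed.

Let excess_weight_le d : 0 < d -> d <= PI ->
  excess dl d * (sin (e / 2) ^ 4 / sin (d / 2) ^ 4) <= far_weight e dl d.
Proof.
  intros Hd0 Hd1. pose proof PI_RGT_0. pose proof e_le_PI. pose proof (Rabs_pos tau). fold e in H1.
  destruct (sin_bound_id (e / 2)) as [Hs0 Hs1]; [lra|lra|].
  pose proof (jordan_sin_lb (d / 2) ltac:(lra) ltac:(lra)) as Hj.
  assert (Hsd : 0 < jordan_c * (d / 2)) by (apply Rmult_lt_0_compat; [apply jordan_c_pos|lra]).
  unfold excess, far_weight. destruct (Rlt_dec dl d) as [Hlt|Hge]; [|rewrite Rmult_0_l; lra].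
  assert (Hn4 : sin (e / 2) ^ 4 <= (e / 2) ^ 4) by (apply pow_incr; lra).
  assert (Hd4 : (jordan_c * (d / 2)) ^ 4 <= sin (d / 2) ^ 4) by (apply pow_incr; lra).
  assert (Hpd : 0 < (jordan_c * (d / 2)) ^ 4) by (apply pow_lt; lra).
  apply Rle_trans with (d / dl * ((e / 2) ^ 4 / (jordan_c * (d / 2)) ^ 4)).
  - apply Rmult_le_compat_l; [apply Rmult_le_pos; [lra|apply Rlt_le, Rinv_0_lt_compat; lra]|].
    apply Rdiv_le_Rdiv; auto. apply pow_le; lra.
  - right. pose proof jordan_c_pos. field. repeat split; lra.
Qed.

Let near_node_error : Rabs (f t - f (node n (J 0))) <= w.
Proof.
  assert (Hfb : bounded_Ipi f) by (apply C2pi_bounded; auto).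
  destruct (le_lt_eq_dec m0 M Hm0) as [Hlt|Heq].
  - replace (J 0) with m0 by (unfold J; rewrite Nat.add_0_r, Nat.mod_small; auto).
    apply modcont_step; auto; [apply node_Ipi; auto|]. unfold node. fold h tau. lra.
  - replace (J 0) with 0%nat by (unfold J; rewrite Nat.add_0_r, Heq, Nat.Div0.mod_same; auto).
    unfold node. rewrite Rmult_0_l, Rplus_0_r, (proj2 Hf).
    apply modcont_step; auto; [unfold Ipi; pose proof PI_RGT_0; lra|].
    replace (t - PI) with tau by (unfold tau; rewrite Heq; fold M; lra). lra.
Qed.

Let gap_circ_bounds k : (1 <= k < M)%nat -> 0 < gap_circ k <= PI.
Proof.
  intros Hk. destruct (rot_gap_bounds k Hk).
  unfold gap_circ, gap, Rmin in *. destruct Rle_dec; lra.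
Qed.

Let sin2_node_rot_circ k : (1 <= k < M)%nat -> sin2_node n (J k) t = sin (gap_circ k / 2) ^ 2.
Proof.
  intros Hk. rewrite sin2_node_rot by lia.
  replace ((tau - INR k * h) / 2) with (- (gap k / 2)) by (unfold gap; field).
  rewrite sin_pow2_opp. unfold gap_circ, Rmin. destruct Rle_dec; [reflexivity|].
  replace ((2 * PI - gap k) / 2) with (PI - gap k / 2) by field. rewrite sin_pow2_PI_sub. reflexivity.
Qed.

Let jackson_weight_rot_eq k : (1 <= k < M)%nat ->
  jackson_weight n (J k) t = jackson_weight n (J 0) t * (sin (e / 2) ^ 4 / sin (gap_circ k / 2) ^ 4).
Proof.
  intros Hk. pose proof (jackson_weight_rot_ratio k Hk) as R.
  pose proof (sin2_node_rot_pos k Hk) as Hpos. rewrite sin2_node_rot_circ in R, Hpos by auto.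
  assert (Hsd : sin (gap_circ k / 2) <> 0) by (intro Z; rewrite Z in Hpos; simpl in Hpos; lra).
  apply (Rmult_eq_reg_r (sin (gap_circ k / 2) ^ 4)); [|apply pow_nonzero; exact Hsd].
  replace (sin (gap_circ k / 2) ^ 4) with ((sin (gap_circ k / 2) ^ 2) ^ 2) at 1 by ring.
  rewrite R. field. exact Hsd.
Qed.

Let far_weight_min a b : far_weight e dl (Rmin a b) <= far_weight e dl a + far_weight e dl b.
Proof.
  pose proof (far_weight_nonneg e dl a dl_pos). pose proof (far_weight_nonneg e dl b dl_pos).
  unfold Rmin. destruct (Rle_dec a b); lra.
Qed.

Let excess_mul_weight_le k : (1 <= k < M)%nat ->
  excess dl (gap_circ k) * jackson_weight n (J k) t <=
  jackson_weight n (J 0) t * (far_weight e dl (gap k) + far_weight e dl (2 * PI - gap k)).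
Proof.
  intros Hk. destruct (gap_circ_bounds k Hk).
  rewrite jackson_weight_rot_eq by auto.
  rewrite <- Rmult_assoc, (Rmult_comm (excess dl _)), Rmult_assoc.
  apply Rmult_le_compat_l; [apply jackson_weight_nonneg|].
  eapply Rle_trans; [apply excess_weight_le; auto|apply far_weight_min].
Qed.

Let far_node_error k : (1 <= k < M)%nat ->
  Rabs (f t - f (node n (J k))) * jackson_weight n (J k) t <=
  w * (2 * jackson_weight n (J k) t +
       jackson_weight n (J 0) t * (far_weight e dl (gap k) + far_weight e dl (2 * PI - gap k))).
Proof.
  intros Hk. pose proof (rot_index_lt k). destruct (gap_circ_bounds k Hk).
  assert (Hfk : Rabs (f t - f (node n (J k))) <= (2 + excess dl (gap_circ k)) * w).
  { rewrite <- circ_dist_node_rot by auto.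
    apply modcont_periodic_excess; [apply C2pi_bounded|apply dl_pos|apply Hf|apply node_Ipi|]; auto. }
  pose proof (excess_mul_weight_le k Hk). pose proof (excess_nonneg dl dl_pos (gap_circ k) ltac:(lra)).
  pose proof (jackson_weight_nonneg (J k)).
  apply Rle_trans with ((2 + excess dl (gap_circ k)) * w * jackson_weight n (J k) t);
    [apply Rmult_le_compat_r; auto|nra].
Qed.

(* The far weights at [gap k] and [2 PI - gap (M - k)] pair up into the two sums of
   [far_weight_sums_le_1] (with [e] and [-e] exchanged when [tau < 0]). *)
Let far_weight_total_le_1 :
  sum_f_R0 (fun i => far_weight e dl (gap (S i)) + far_weight e dl (2 * PI - gap (S i))) (M - 2) <= 1.
Proof.
  rewrite sum_plus.
  replace (sum_f_R0 (fun i => far_weight e dl (2 * PI - gap (S i))) (M - 2)) with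
    (sum_f_R0 (fun j => far_weight e dl (INR (S j) * h + tau)) (M - 2)).
  2:{ rewrite <- (sum_f_R0_rev (fun j => far_weight e dl (INR (S j) * h + tau)) (M - 2)).
      apply sum_eq. intros i Hi. unfold gap. f_equal.
      rewrite !S_INR, !minus_INR by lia. replace (INR 2) with 2 by (simpl; ring).
      rewrite <- M_mul_h. ring. }
  pose proof (node_step_le_delta n Hn) as Hr. fold h dl in Hr.
  unfold gap, e, Rabs in *. destruct (Rcase_abs tau) as [Hneg|Hpos].
  - rewrite (sum_eq (fun i => far_weight (- tau) dl (INR (S i) * h - tau))
                    (fun i => far_weight (- tau) dl (INR (S i) * h + - tau))) by (intros; f_equal; ring).
    rewrite (sum_eq (fun j => far_weight (- tau) dl (INR (S j) * h + tau))
                    (fun i => far_weight (- tau) dl (INR (S i) * h - - tau))) by (intros; f_equal; ring).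
    rewrite Rplus_comm. apply far_weight_sums_le_1; auto; lra.
  - apply far_weight_sums_le_1; auto; lra.
Qed.

Let jackson_error_sum :
  f t - jackson_rat n f t =
  sum_f_R0 (fun j => (f t - f (node n j)) * jackson_weight n j t) (M - 1) / jackson_den n t.
Proof.
  pose proof jackson_den_pos. unfold jackson_rat.
  replace (f t - jackson_num n f t / jackson_den n t) with
    ((f t * jackson_den n t - jackson_num n f t) / jackson_den n t) by (field; lra).
  f_equal. unfold jackson_num, jackson_den. fold M.
  rewrite scal_sum, <- minus_sum. apply sum_eq; intros; ring.
Qed.

Lemma jackson_pointwise : Rabs (f t - jackson_rat n f t) <= 2 * w.
Proof.
  pose proof jackson_den_pos as HQ. pose proof (jackson_weight_nonneg (J 0)) as HW0.
  set (T := fun k => Rabs (f t - f (node n (J k))) * jackson_weight n (J k) t).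
  rewrite jackson_error_sum. unfold Rdiv.
  rewrite Rabs_mult, (Rabs_right (/ _)) by (apply Rle_ge, Rlt_le, Rinv_0_lt_compat; auto).
  apply (Rmult_le_reg_r (jackson_den n t)); auto. rewrite Rmult_assoc, Rinv_l, Rmult_1_r by lra.
  eapply Rle_trans; [apply sum_f_R0_triangle|].
  rewrite (sum_eq _ (fun j => Rabs (f t - f (node n j)) * jackson_weight n j t))
    by (intros; rewrite Rabs_mult, (Rabs_right (jackson_weight n i t)); auto; apply Rle_ge, jackson_weight_nonneg).
  rewrite <- (sum_f_R0_rotate (fun j => Rabs (f t - f (node n j)) * jackson_weight n j t) M m0) by lia.
  change (sum_f_R0 (fun k => Rabs (f t - f (node n ((m0 + k) mod M))) * jackson_weight n ((m0 + k) mod M) t) (M - 1))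
    with (sum_f_R0 T (M - 1)).
  rewrite decomp_sum by lia. replace (pred (M - 1)) with (M - 2)%nat by lia.
  assert (HT0 : T 0%nat <= w * jackson_weight n (J 0) t).
  { unfold T. apply Rmult_le_compat_r; [exact HW0|apply near_node_error]. }
  assert (HTk : sum_f_R0 (fun i => T (S i)) (M - 2) <=
     w * (2 * sum_f_R0 (fun i => jackson_weight n (J (S i)) t) (M - 2) + jackson_weight n (J 0) t *
       sum_f_R0 (fun i => far_weight e dl (gap (S i)) + far_weight e dl (2 * PI - gap (S i))) (M - 2))).
  { rewrite <- sum_f_R0_lin_comb. apply sum_Rle. intros i Hi. apply far_node_error. lia. }
  pose proof far_weight_total_le_1 as HS. rewrite jackson_den_split.
  set (Far := sum_f_R0 (fun i => far_weight e dl (gap (S i)) + far_weight e dl (2 * PI - gap (S i))) (M - 2))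
    in HS, HTk.
  assert (w * (jackson_weight n (J 0) t * Far) <= w * jackson_weight n (J 0) t)
    by (apply Rmult_le_compat_l; [exact w_nonneg|nra]).
  lra.
Qed.

End PointwiseError.

Theorem jackson_approximation f n : C2pi f -> (2 <= n)%nat ->
  exists r, trig_rat n n r /\ C2pi r /\
    forall t, Ipi t -> Rabs (f t - r t) <= 2 * modcont f (jackson_delta n).
Proof.
  intros Hf Hn.
  assert (HQ : forall t, Ipi t -> 0 < jackson_den n t /\
                 Rabs (f t - jackson_rat n f t) <= 2 * modcont f (jackson_delta n)).
  { intros t Ht. destruct (nearest_node n t Hn Ht) as [m0 [Hm0 Hnear]]. split.
    - apply (jackson_den_pos n t m0 Hn Hm0 Hnear).
    - apply (jackson_pointwise f n t m0 Hf Hn Ht Hm0 Hnear). }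
  exists (jackson_rat n f). split; [|split].
  - exists (jackson_num n f), (jackson_den n).
    split; [apply trig_poly_jackson_num|split; [apply trig_poly_jackson_den|]].
    split; [intros t Ht; apply (HQ t Ht)|reflexivity].
  - split.
    + apply cont_on_of_continuity_pt. intros t Ht.
      apply continuity_pt_div;
        [apply continuity_pt_jackson_num|apply continuity_pt_jackson_den|apply Rgt_not_eq, (HQ t Ht)].
    + unfold jackson_rat. rewrite jackson_num_periodic, jackson_den_periodic. reflexivity.
  - intros t Ht. apply (HQ t Ht).
Qed.

Lemma E_alpha_le N x alpha L n f r g : trig_rat n n r -> is_FIF N x alpha r (L r) g ->
  E_alpha N x alpha L n n f <= supnorm (fun t => f t - g t).
Proof.
  intros Hr Hg. unfold E_alpha, inf_R.
  enough (- supnorm (fun t => f t - g t) <= sup_R (fun y => exists r g,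
            trig_rat n n r /\ is_FIF N x alpha r (L r) g /\ - y = supnorm (fun t => f t - g t)))
    by lra.
  apply le_sup_R; [exists r, g; split; [exact Hr|split; [exact Hg|ring]]|].
  exists 0. intros y [r' [g' [_ [_ Hy]]]]. pose proof (supnorm_nonneg (fun t => f t - g' t)). lra.
Qed.

Theorem mainTheorem7 (N : nat) (x : nat -> R) (alpha : nat -> R)
  (L : (R -> R) -> (R -> R)) (f : R -> R) (n : nat) :
  partition N x ->
  (forall i, (1 <= i <= N)%nat -> -1 < alpha i < 1) ->
  admissible_L N x L ->
  C2pi f ->
  (2 <= n)%nat ->
  E_alpha N x alpha L n n f <=
    (1 + alpha_norm alpha N * (norm_IdmL L - 1)) / (1 - alpha_norm alpha N)
      * 2 * modcont f (2 * PI * sqrt 3 / (INR n + 2))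
    + alpha_norm alpha N / (1 - alpha_norm alpha N) * norm_IdmL L * supnorm f.
Proof.
  intros Hp Ha HL Hf Hn.
  destruct (jackson_approximation f n Hf Hn) as [r [Htr [Hr Hfr]]].
  destruct (admissible_L_endpoints N x L r Hp HL Hr) as [E0 E1].
  destruct (fif_exists N x alpha r (L r) Hp Ha (proj1 Hr) (proj1 (proj1 HL r Hr)) E0 E1) as [g Hg].
  eapply Rle_trans; [apply (E_alpha_le N x alpha L n f r g Htr Hg)|].
  eapply Rle_trans; [apply (fif_approx_error N x alpha L f r g _ Hp Ha HL Hf Hr Hfr Hg)|].
  destruct (alpha_norm_bounds alpha N Ha) as [Ha0 Ha1].
  right. unfold jackson_delta. field. lra.
Qed.
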